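(* Let $\pi:E\to B$ be a semifunctor between small semicategories. The following are equivalent: (1) $\pi$ is exponentiable in $\mathbf{Semicat}/B$; (2) the virtual double functor $\nabla\pi:\mathbb{L}(B)\to\mathbb{S}\mathrm{pan}$ corresponding to $\pi$ preserves opcartesian multicells; (3) for every morphism $f$ of $E$ and every factorization $\pi(f)=g_1\cdot\ldots\cdot g_n$ ($n\ge2$) in $B$, there is exactly one tuple $(f_1,\dots,f_n)$ of composable morphisms of $E$ with $f=f_1\cdot\ldots\cdot f_n$ and $\pi(f_i)=g_i$ for all $i$; (4) the same as (3) but only for binary factorizations ($n=2$).
   Context: A semicategory is a directed graph with an associative composition (no identities required); a semifunctor preserves the graph and composition; $g\cdot h$ denotes composition in diagrammatic order. $\pi$ is exponentiable in the slice $\mathbf{Semicat}/B$ if the functor $\mathbf{Semicat}/B\to\mathbf{Semicat}/B$ sending $X\to B$ to $X\times_B E\to B$ has a right adjoint. A virtual double category (VDC) has objects, tight arrows forming a category, loose arrows, and $n$-ary multicells from a composable path of $n$ loose arrows to a loose arrow with two tight sides, with identities and an associative unital composition. A globular multicell $\alpha$ (identity tight sides) from $(\varphi_1,\dots,\varphi_n):x\nrightarrow y$ to $\psi$ is opcartesian if for all paths $\chi_0$ ending at $x$ and $\chi_1$ starting at $y$, every multicell $\beta$ with loose source $(\chi_0,\varphi_1,\dots,\varphi_n,\chi_1)$ factors uniquely as $\frac{\mathrm{id}_{\chi_0}\,\alpha\,\mathrm{id}_{\chi_1}}{\beta'}$. $\mathbb{S}\mathrm{pan}$ is the VDC with sets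 as objects, functions as tight arrows, spans as loose arrows, and multicells from spans $S_1,\dots,S_n$ to $T$ given by maps from the iterated pullback $S_1\times_{X_1}\cdots\times_{X_{n-1}}S_n$ to $T$ compatible with legs and tight sides. $\mathbb{L}(B)$ is the VDC whose objects are the objects of $B$, with only identity tight arrows, whose loose arrows are the morphisms of $B$, and which has, for $n\ge1$, a unique globular $n$-ary multicell from $(f_1,\dots,f_n)$ to $g$ exactly when $g=f_1\cdot\ldots\cdot f_n$, and no other multicells. $\nabla\pi:\mathbb{L}(B)\to\mathbb{S}\mathrm{pan}$ sends an object $b$ to the set $\pi^{-1}(b)$ of objects of $E$ over $b$, a morphism $f:b_1\to b_2$ to the span $\pi^{-1}(b_1)\leftarrow\{\text{morphisms of }E\text{ over }f\}\rightarrow\pi^{-1}(b_2)$ given by domain and codomain, and a multicell $(f_1,\dots,f_n)\to g$ to the map of spans given by composition in $E$. *)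

From Stdlib Require Import List ProofIrrelevance.
Import ListNotations.
Unset Implicit Arguments.


(* in diagrammatic order: [comp f g p] is f . g, defined when           *)
(* [p : cod f = dom g].  All semicategories live in one fixed universe  *)
(* ("small").                                                           *)
Record semicat := {
  ob : Type;
  mor : Type;
  dom : mor -> ob;
  cod : mor -> ob;
  comp : forall f g : mor, cod f = dom g -> mor;
  comp_dom : forall f g p, dom (comp f g p) = dom f;
  comp_cod : forall f g p, cod (comp f g p) = cod g;
  comp_assoc : forall f g h (p : cod f = dom g) (q : cod g = dom h)
                 (p' : cod (comp f g p) = dom h) (q' : cod f = dom (comp g h q)),
      comp (comp f g p) h p' = comp f (comp g h q) q'
}.
Arguments dom {s} _.
Arguments cod {s} _.
Arguments comp {s} f g _.

Record semifunctor (X Y : semicat) := {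
  fob : ob X -> ob Y;
  fmor : mor X -> mor Y;
  fdom : forall f, dom (fmor f) = fob (dom f);
  fcod : forall f, cod (fmor f) = fob (cod f);
  fcomp : forall f g (p : cod f = dom g) (p' : cod (fmor f) = dom (fmor g)),
      fmor (comp f g p) = comp (fmor f) (fmor g) p'
}.
Arguments fob {X Y} _ _.
Arguments fmor {X Y} _ _.
Arguments fdom {X Y} _ _.
Arguments fcod {X Y} _ _.
Arguments fcomp {X Y} _ f g p p'.

Definition sfeq {X Y : semicat} (F G : semifunctor X Y) : Prop :=
  (forall x, fob F x = fob G x) /\ (forall f, fmor F f = fmor G f).

Definition sfcomp {X Y Z : semicat} (F : semifunctor X Y) (G : semifunctor Y Z)
  : semifunctor X Z.
Proof.
  refine {| fob := fun x => fob G (fob F x);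
            fmor := fun f => fmor G (fmor F f) |}.
  - intro f. rewrite fdom, fdom. reflexivity.
  - intro f. rewrite fcod, fcod. reflexivity.
  - intros f g p p'.
    assert (p1 : cod (fmor F f) = dom (fmor F g))
      by (rewrite fcod, fdom, p; reflexivity).
    rewrite (fcomp F f g p p1). apply fcomp.
Defined.

Lemma comp_pi (X : semicat) (f g : mor X) (p p' : cod f = dom g) :
  comp f g p = comp f g p'.
Proof. rewrite (proof_irrelevance _ p p'). reflexivity. Qed.

Lemma comp_congr (X : semicat) (f f' g g' : mor X) (p : cod f = dom g)
  (p' : cod f' = dom g') : f = f' -> g = g' -> comp f g p = comp f' g' p'.
Proof. intros -> ->. apply comp_pi. Qed.

Record sobj (B : semicat) := { carrier : semicat; sproj : semifunctor carrier B }.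
Arguments carrier {B} _.
Arguments sproj {B} _.
Arguments Build_sobj {B} _ _.

Definition over {B : semicat} (X Y : sobj B) (h : semifunctor (carrier X) (carrier Y))
  : Prop := sfeq (sfcomp h (sproj Y)) (sproj X).

Section Pullback.
Variables (B E : semicat) (pi : semifunctor E B) (X : sobj B).

Definition pbob : Type := { p : ob (carrier X) * ob E | fob (sproj X) (fst p) = fob pi (snd p) }.
Definition pbmor : Type := { p : mor (carrier X) * mor E | fmor (sproj X) (fst p) = fmor pi (snd p) }.

Definition pbdom (u : pbmor) : pbob.
Proof.
  refine (exist _ (dom (fst (proj1_sig u)), dom (snd (proj1_sig u))) _); simpl.
  rewrite <- fdom, <- fdom. f_equal. exact (proj2_sig u).
Defined.

Definition pbcod (u : pbmor) : pbob.
Proof.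
  refine (exist _ (cod (fst (proj1_sig u)), cod (snd (proj1_sig u))) _); simpl.
  rewrite <- fcod, <- fcod. f_equal. exact (proj2_sig u).
Defined.

Definition pbcomp (u v : pbmor) (h : pbcod u = pbdom v) : pbmor.
Proof.
  assert (h1 : cod (fst (proj1_sig u)) = dom (fst (proj1_sig v)))
    by exact (f_equal (fun o => fst (proj1_sig o)) h).
  assert (h2 : cod (snd (proj1_sig u)) = dom (snd (proj1_sig v)))
    by exact (f_equal (fun o => snd (proj1_sig o)) h).
  refine (exist _ (comp _ _ h1, comp _ _ h2) _); simpl.
  assert (h3 : cod (fmor (sproj X) (fst (proj1_sig u)))
               = dom (fmor (sproj X) (fst (proj1_sig v))))
    by (rewrite fcod, fdom, h1; reflexivity).
  assert (h4 : cod (fmor pi (snd (proj1_sig u))) = dom (fmor pi (snd (proj1_sig v))))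
    by (rewrite fcod, fdom, h2; reflexivity).
  rewrite (fcomp _ _ _ h1 h3), (fcomp _ _ _ h2 h4).
  apply comp_congr; [exact (proj2_sig u) | exact (proj2_sig v)].
Defined.

Lemma pbmor_eq (u v : pbmor) : proj1_sig u = proj1_sig v -> u = v.
Proof.
  destruct u as [a ha], v as [b hb]; simpl; intros ->.
  f_equal; apply proof_irrelevance.
Qed.
Lemma pbob_eq (u v : pbob) : proj1_sig u = proj1_sig v -> u = v.
Proof.
  destruct u as [a ha], v as [b hb]; simpl; intros ->.
  f_equal; apply proof_irrelevance.
Qed.

Definition pbc : semicat.
Proof.
  refine {| ob := pbob; mor := pbmor; dom := pbdom; cod := pbcod; comp := pbcomp |}.
  - intros f g p; apply pbob_eq; simpl; rewrite !comp_dom; reflexivity.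
  - intros f g p; apply pbob_eq; simpl; rewrite !comp_cod; reflexivity.
  - intros f g h p q p' q'; apply pbmor_eq; simpl; f_equal; apply comp_assoc.
Defined.

Definition pbproj : semifunctor pbc B.
Proof.
  refine {| fob := fun (x : ob pbc) => fob (sproj X) (fst (proj1_sig (x : pbob)));
            fmor := fun (u : mor pbc) => fmor (sproj X) (fst (proj1_sig (u : pbmor))) |}.
  - intro f; apply fdom.
  - intro f; apply fcod.
  - intros f g p p'; simpl; apply fcomp.
Defined.

Definition pbobj : sobj B := {| carrier := pbc; sproj := pbproj |}.
End Pullback.

Arguments pbc {B E} pi X.
Arguments pbob {B E} pi X.
Arguments pbmor {B E} pi X.
Arguments pbob_eq {B E pi X} u v _.
Arguments pbmor_eq {B E pi X} u v _.
Arguments pbobj {B E} pi X.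

Definition pbmap {B E : semicat} (pi : semifunctor E B) {X X' : sobj B}
  (k : semifunctor (carrier X) (carrier X')) (hk : over X X' k)
  : semifunctor (pbc pi X) (pbc pi X').
Proof.
  refine {| fob := fun (x : ob (pbc pi X)) =>
              (exist _ (fob k (fst (proj1_sig (x : pbob pi X))), snd (proj1_sig (x : pbob pi X))) _
                : ob (pbc pi X'));
            fmor := fun (u : mor (pbc pi X)) =>
              (exist _ (fmor k (fst (proj1_sig (u : pbmor pi X))), snd (proj1_sig (u : pbmor pi X))) _
                : mor (pbc pi X')) |}.
  Unshelve.
  4: { simpl. destruct hk as [h1 _]. rewrite <- (proj2_sig x). apply (h1 _). }
  4: { simpl. destruct hk as [_ h2]. rewrite <- (proj2_sig u). apply (h2 _). }
  - intro f. apply pbob_eq; simpl. rewrite fdom. reflexivity.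
  - intro f. apply pbob_eq; simpl. rewrite fcod. reflexivity.
  - intros f g p p'. apply pbmor_eq; simpl. f_equal.
    + apply fcomp.
    + apply comp_pi.
Defined.

(* (1)  pi is exponentiable in Semicat/B: the functor  - x_B E  on Semicat/B
   has a right adjoint.  Stated via the (equivalent, by definition of
   adjunction through universal arrows) condition that every object Y of
   Semicat/B has a couniversal arrow  eps : R x_B E -> Y  from the functor. *)
Definition exponentiable {B E : semicat} (pi : semifunctor E B) : Prop :=
  forall Y : sobj B,
    exists (R : sobj B) (eps : semifunctor (pbc pi R) (carrier Y)),
      over (pbobj pi R) Y eps /\
      forall (X : sobj B) (h : semifunctor (pbc pi X) (carrier Y)),
        over (pbobj pi X) Y h ->
        exists (h' : semifunctor (carrier X) (carrier R)) (hh' : over X R h'),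
          sfeq (sfcomp (pbmap pi h' hh') eps) h /\
          forall (h'' : semifunctor (carrier X) (carrier R)) (hh'' : over X R h''),
            sfeq (sfcomp (pbmap pi h'' hh'') eps) h -> sfeq h'' h'.

(* The virtual double category Span (sets = types).                    *)
Record span (X Y : Type) := { apex : Type; lleg : apex -> X; rleg : apex -> Y }.
Arguments apex {X Y} _.
Arguments lleg {X Y} _ _.
Arguments rleg {X Y} _ _.
Arguments Build_span {X Y} _ _ _.

Inductive spath : Type -> Type -> Type :=
| snil : forall X : Type, spath X X
| scons : forall (X Y Z : Type), span X Y -> spath Y Z -> spath X Z.
Arguments scons {X Y Z} _ _.

Fixpoint sapp {X Y Z : Type} (p : spath X Y) : spath Y Z -> spath X Z :=
  match p in spath X Y return spath Y Z -> spath X Z with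
  | snil _ => fun q => q
  | scons Sp p' => fun q => scons Sp (sapp p' q)
  end.

(* The iterated pullback  S1 x_{X1} ... x_{X(n-1)} Sn  of a path, as a span
   from X0 to Xn (its elements are composable tuples; for the empty path
   at X it is X itself, with identity legs). *)
Fixpoint pb {X Z : Type} (p : spath X Z) : span X Z :=
  match p in spath X Z return span X Z with
  | snil X => Build_span X (fun x => x) (fun x => x)
  | scons Sp q =>
      Build_span {st : apex Sp * apex (pb q) | rleg Sp (fst st) = lleg (pb q) (snd st)}
                 (fun st => lleg Sp (fst (proj1_sig st)))
                 (fun st => rleg (pb q) (snd (proj1_sig st)))
  end.

(* A multicell of Span from the path p : X0 -|-> Xn to the span T : Y0 -|-> Y1
   with tight sides u : X0 -> Y0 and v : Xn -> Y1 *)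
Definition is_cell {X Z X' Z' : Type} (p : spath X Z) (T : span X' Z')
  (u : X -> X') (v : Z -> Z') (b : apex (pb p) -> apex T) : Prop :=
  forall x, lleg T (b x) = u (lleg (pb p) x) /\ rleg T (b x) = v (rleg (pb p) x).

Definition psplit : forall {X Y : Type} (p : spath X Y) {Z : Type} (q : spath Y Z)
  (e : apex (pb (sapp p q))),
  { ac : apex (pb p) * apex (pb q) |
      rleg (pb p) (fst ac) = lleg (pb q) (snd ac) /\
      lleg (pb p) (fst ac) = lleg (pb (sapp p q)) e /\
      rleg (pb q) (snd ac) = rleg (pb (sapp p q)) e }.
Proof.
  intros X Y p. induction p as [X | X Y W Sp p IH]; intros Z q e.
  - exists (lleg (pb q) e, e). simpl. auto.
  - simpl in e. destruct e as [[s e'] h]. simpl in h.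
    destruct (IH Z q e') as [[a c] [h1 [h2 h3]]]. simpl in *.
    refine (exist _ (exist _ (s, a) _, c) _).
    simpl. split; [exact h1 | split; [reflexivity | exact h3]].
    Unshelve. simpl. rewrite h2. exact h.
Defined.

(* the whiskered composite  (id_{chi0}, alpha, id_{chi1})  of Span, acting on
   tuples: it replaces the middle segment (over phi) by its image under alpha *)
Definition whisker {X Y : Type} (phi : spath X Y) (T : span X Y)
  (c : apex (pb phi) -> apex T) (hc : is_cell phi T (fun x => x) (fun y => y) c) :
  forall {W : Type} (chi0 : spath W X) {Z : Type} (chi1 : spath Y Z)
    (e : apex (pb (sapp chi0 (sapp phi chi1)))),
    { e' : apex (pb (sapp chi0 (scons T chi1))) |
        lleg (pb (sapp chi0 (scons T chi1))) e' = lleg (pb (sapp chi0 (sapp phi chi1))) e /\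
        rleg (pb (sapp chi0 (scons T chi1))) e' = rleg (pb (sapp chi0 (sapp phi chi1))) e }.
Proof.
  intros W chi0. induction chi0 as [W | W V X' Sp chi0 IH]; intros Z chi1 e.
  - simpl in *. destruct (psplit phi chi1 e) as [[a c1] [h1 [h2 h3]]]. simpl in *.
    destruct (hc a) as [hl hr].
    refine (exist _ (exist _ (c a, c1) _) _).
    simpl. split; [rewrite hl; exact h2 | exact h3].
    Unshelve. simpl. rewrite hr. exact h1.
  - simpl in e. destruct e as [[s e1] h]. simpl in h.
    destruct (IH phi T c hc Z chi1 e1) as [e1' [hl hr]].
    refine (exist _ (exist _ (s, e1') _) _).
    simpl. split; [reflexivity | exact hr].
    Unshelve. exact (eq_trans h (eq_sym hl)).
Defined.

Definition span_opcartesian {X Y : Type} (phi : spath X Y) (T : span X Y)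
  (c : apex (pb phi) -> apex T) (hc : is_cell phi T (fun x => x) (fun y => y) c) : Prop :=
  forall (W : Type) (chi0 : spath W X) (Z : Type) (chi1 : spath Y Z)
         (W' Z' : Type) (R : span W' Z') (u : W -> W') (v : Z -> Z')
         (b : apex (pb (sapp chi0 (sapp phi chi1))) -> apex R),
    is_cell (sapp chi0 (sapp phi chi1)) R u v b ->
    exists b' : apex (pb (sapp chi0 (scons T chi1))) -> apex R,
      is_cell (sapp chi0 (scons T chi1)) R u v b' /\
      (forall e, b e = b' (proj1_sig (whisker phi T c hc chi0 chi1 e))) /\
      (forall b'' : apex (pb (sapp chi0 (scons T chi1))) -> apex R,
          is_cell (sapp chi0 (scons T chi1)) R u v b'' ->
          (forall e, b e = b'' (proj1_sig (whisker phi T c hc chi0 chi1 e))) ->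
          forall e', b'' e' = b' e').

Inductive lcomp_rel (B : semicat) : list (mor B) -> mor B -> Prop :=
| lcomp_one : forall f, lcomp_rel B [f] f
| lcomp_cons : forall f l g (p : cod f = dom g),
    lcomp_rel B l g -> lcomp_rel B (f :: l) (comp f g p).
Arguments lcomp_rel {B} _ _.

(* The virtual double category L(B).  Loose arrows x -|-> y are the     *)
(* morphisms f of B with dom f = x, cod f = y; loose paths:             *)
Inductive bpath (B : semicat) : ob B -> ob B -> Type :=
| bnil : forall x, bpath B x x
| bcons : forall x y z (f : mor B), dom f = x -> cod f = y -> bpath B y z -> bpath B x z.
Arguments bnil {B} x.
Arguments bcons {B x y z} f _ _ _.

Fixpoint blist {B : semicat} {x y : ob B} (p : bpath B x y) : list (mor B) :=
  match p with
  | bnil _ => []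
  | bcons f _ _ q => f :: blist q
  end.

Fixpoint bapp {B : semicat} {x y z : ob B} (p : bpath B x y) : bpath B y z -> bpath B x z :=
  match p in bpath _ x y return bpath B y z -> bpath B x z with
  | bnil _ => fun q => q
  | bcons f hd hc p' => fun q => bcons f hd hc (bapp p' q)
  end.

(* The multicells of L(B) are globular and unique: there is a (unique)
   multicell from the path p to g iff p is non-empty and g is its composite.
   Multicells are therefore represented by proofs of this proposition. *)
Definition LCell {B : semicat} {x y : ob B} (p : bpath B x y) (g : mor B) : Prop :=
  lcomp_rel (blist p) g.

(* Opcartesian multicells of L(B) (the defining factorisation is unique
   automatically, since L(B) has at most one multicell with given boundary). *)
Definition L_opcartesian {B : semicat} {x y : ob B} (p : bpath B x y) (g : mor B)
  (hd : dom g = x) (hc : cod g = y) : Prop :=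
  forall (w z : ob B) (chi0 : bpath B w x) (chi1 : bpath B y z) (rho : mor B),
    dom rho = w -> cod rho = z ->
    LCell (bapp chi0 (bapp p chi1)) rho -> LCell (bapp chi0 (bcons g hd hc chi1)) rho.

Section Nabla.
Variables (B E : semicat) (pi : semifunctor E B).

Definition fib (b : ob B) : Type := { e : ob E | fob pi e = b }.

Definition nabla_span (f : mor B) (x y : ob B) (hd : dom f = x) (hc : cod f = y)
  : span (fib x) (fib y) :=
  Build_span { m : mor E | fmor pi m = f }
    (fun m => exist _ (dom (proj1_sig m))
                (eq_trans (eq_sym (fdom pi (proj1_sig m)))
                          (eq_trans (f_equal dom (proj2_sig m)) hd)) : fib x)
    (fun m => exist _ (cod (proj1_sig m))
                (eq_trans (eq_sym (fcod pi (proj1_sig m)))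
                          (eq_trans (f_equal cod (proj2_sig m)) hc)) : fib y).

Fixpoint nablap {x y : ob B} (p : bpath B x y) : spath (fib x) (fib y) :=
  match p in bpath _ x y return spath (fib x) (fib y) with
  | bnil x => snil (fib x)
  | bcons f hd hc q => scons (nabla_span f _ _ hd hc) (nablap q)
  end.

Fixpoint tuplist {x y : ob B} (p : bpath B x y) : apex (pb (nablap p)) -> list (mor E) :=
  match p in bpath _ x y return apex (pb (nablap p)) -> list (mor E) with
  | bnil _ => fun _ => []
  | bcons f hd hc q => fun t =>
      proj1_sig (fst (proj1_sig t)) :: tuplist q (snd (proj1_sig t))
  end.
End Nabla.
Arguments fib {B E} pi b.
Arguments nabla_span {B E} pi f x y hd hc.
Arguments nablap {B E} pi {x y} p.
Arguments tuplist {B E} pi {x y} p _.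

(* (2)  nabla pi preserves opcartesian multicells: for every opcartesian
   multicell alpha : p => g of L(B), its image nabla pi (alpha) -- the map of
   spans given by composition in E -- is opcartesian in Span. *)
Definition nabla_preserves_opcartesian {B E : semicat} (pi : semifunctor E B) : Prop :=
  forall (x y : ob B) (p : bpath B x y) (g : mor B) (hd : dom g = x) (hc : cod g = y),
    LCell p g -> L_opcartesian p g hd hc ->
    exists (c : apex (pb (nablap pi p)) -> apex (nabla_span pi g x y hd hc))
           (hcell : is_cell (nablap pi p) (nabla_span pi g x y hd hc)
                      (fun a => a) (fun a => a) c),
      (forall t, lcomp_rel (tuplist pi p t) (proj1_sig (c t))) /\
      span_opcartesian (nablap pi p) (nabla_span pi g x y hd hc) c hcell.

Definition unique_lifting_nary {B E : semicat} (pi : semifunctor E B) : Prop :=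
  forall (f : mor E) (gs : list (mor B)),
    2 <= length gs -> lcomp_rel gs (fmor pi f) ->
    exists! fs : list (mor E), map (fmor pi) fs = gs /\ lcomp_rel fs f.

Definition unique_lifting_binary {B E : semicat} (pi : semifunctor E B) : Prop :=
  forall (f : mor E) (g1 g2 : mor B) (p : cod g1 = dom g2),
    comp g1 g2 p = fmor pi f ->
    exists! fs : mor E * mor E,
      fmor pi (fst fs) = g1 /\ fmor pi (snd fs) = g2 /\
      exists q : cod (fst fs) = dom (snd fs), comp (fst fs) (snd fs) q = f.

(* (3) <-> (4) is induction on the length of a factorisation.

   A globular multicell of Span is opcartesian exactly when it is a bijection of
   apexes.  Every multicell of L(B) is opcartesian, and nabla pi sends it to the
   composition map from composable tuples of lifts of (g1, ..., gn) to lifts of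
   their composite; its bijectivity is (3).

   For (4) -> (1), the exponential of Y has as objects over b the maps from the
   fibre of pi over b to the fibre of Y over b, and as morphisms over f the maps
   between fibres over f; they compose because the lifts of a factorisation are
   unique.  For (1) -> (4), pulling back along pi is a left adjoint, so it
   preserves the pushout exhibiting the free composable pair over (g1, g2) as two
   arrows glued at a point; the pushout of the pulled-back arrows has as
   morphisms over g1 . g2 exactly the composable pairs of lifts. *)

From Stdlib Require Import List ProofIrrelevance ClassicalEpsilon.
From Stdlib Require Import FunctionalExtensionality PropExtensionality.
Import ListNotations.

Lemma sig_eq {A : Type} {P : A -> Prop} (u v : {x | P x}) : proj1_sig u = proj1_sig v -> u = v.
Proof. destruct u, v; simpl; intros ->; f_equal; apply proof_irrelevance. Qed.

(** * Composites of strings of morphisms *)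

Section Composites.
Context {B : semicat}.

Lemma lcomp_rel_nonempty (l : list (mor B)) h : lcomp_rel l h -> l <> [].
Proof. intros H; destruct H; discriminate. Qed.

Lemma lcomp_rel_single (a h : mor B) : lcomp_rel [a] h -> h = a.
Proof.
  intros H; inversion H; subst; auto.
  exfalso; eapply lcomp_rel_nonempty; eauto.
Qed.

Lemma lcomp_rel_cons_inv (a : mor B) l h : l <> [] -> lcomp_rel (a :: l) h ->
  exists g (p : cod a = dom g), lcomp_rel l g /\ h = comp a g p.
Proof. intros Hn H; inversion H; subst; [congruence | eauto]. Qed.

Lemma lcomp_rel_functional (l : list (mor B)) h1 h2 :
  lcomp_rel l h1 -> lcomp_rel l h2 -> h1 = h2.
Proof.
  intros H1; revert h2; induction H1 as [f | f l g p H IH]; intros h2 H2.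
  - symmetry; apply lcomp_rel_single; auto.
  - destruct (lcomp_rel_cons_inv f l h2) as [g' [p' [Hg' ->]]]; auto.
    + eapply lcomp_rel_nonempty; eauto.
    + apply comp_congr; auto.
Qed.

Lemma lcomp_rel_compose_prefix (l l1 : list (mor B)) r g :
  lcomp_rel (l ++ l1) r -> lcomp_rel l g -> lcomp_rel (g :: l1) r.
Proof.
  intros H Hg. destruct l1 as [|b l1].
  - rewrite app_nil_r in H. rewrite (lcomp_rel_functional _ _ _ H Hg). constructor.
  - revert r g H Hg. induction l as [|a l IH]; intros r g H Hg; [inversion Hg|].
    destruct l as [|a' l].
    + apply lcomp_rel_single in Hg. subst. exact H.
    + destruct (lcomp_rel_cons_inv a (a' :: l) g ltac:(discriminate) Hg) as [G [p [HG ->]]].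
      destruct (lcomp_rel_cons_inv a ((a' :: l) ++ b :: l1) r ltac:(discriminate) H)
        as [H' [q [HH ->]]].
      destruct (lcomp_rel_cons_inv G (b :: l1) H' ltac:(discriminate) (IH _ _ HH HG))
        as [K [s [HK ->]]].
      assert (p' : cod (comp a G p) = dom K) by (rewrite comp_cod; exact s).
      assert (q' : cod a = dom (comp G K s)) by (rewrite comp_dom; exact p).
      rewrite (comp_pi _ a (comp G K s) q q'), <- (comp_assoc _ a G K p s p' q').
      constructor; auto.
Qed.

Lemma lcomp_rel_app_replace (l0 X Y : list (mor B)) r :
  X <> [] -> (forall r', lcomp_rel X r' -> lcomp_rel Y r') ->
  lcomp_rel (l0 ++ X) r -> lcomp_rel (l0 ++ Y) r.
Proof.
  intros HX HXY. revert r. induction l0 as [|a l0 IH]; intros r H; simpl in *; auto.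
  destruct (lcomp_rel_cons_inv a (l0 ++ X) r) as [G [p [HG ->]]]; auto.
  - destruct l0; simpl; [auto | discriminate].
  - constructor; auto.
Qed.

Fixpoint chain (e : ob B) (l : list (mor B)) : Prop :=
  match l with
  | [] => True
  | m :: l' => dom m = e /\ chain (cod m) l'
  end.

Fixpoint chain_end (e : ob B) (l : list (mor B)) : ob B :=
  match l with
  | [] => e
  | m :: l' => chain_end (cod m) l'
  end.

Lemma chain_head (l : list (mor B)) e1 e2 : chain e1 l -> chain e2 l -> l <> [] -> e1 = e2.
Proof. destruct l; simpl; [congruence | intros [A _] [C _] _; congruence]. Qed.

Lemma lcomp_rel_chain (l : list (mor B)) h :
  lcomp_rel l h -> chain (dom h) l /\ cod h = chain_end (dom h) l.
Proof.
  induction 1 as [f | f l g p H [IH1 IH2]]; simpl; auto.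
  rewrite comp_dom, comp_cod, p. auto.
Qed.

Lemma chain_lcomp_rel (l : list (mor B)) e : chain e l -> l <> [] -> exists h, lcomp_rel l h.
Proof.
  revert e. induction l as [|m l IH]; intros e Hc Hn; [congruence|].
  destruct l as [|m' l]; [exists m; constructor|].
  destruct Hc as [_ Hc]. destruct (IH _ Hc ltac:(discriminate)) as [h Hh].
  destruct (lcomp_rel_chain _ _ Hh) as [[Hd _] _]. destruct Hc as [Hc _].
  assert (p : cod m = dom h) by congruence.
  exists (comp m h p). constructor; auto.
Qed.
End Composites.

Lemma lcomp_rel_map {B E : semicat} (pi : semifunctor E B) l h :
  lcomp_rel l h -> lcomp_rel (map (fmor pi) l) (fmor pi h).
Proof.
  induction 1 as [f | f l g p H IH]; simpl; [constructor|].
  assert (p' : cod (fmor pi f) = dom (fmor pi g)) by (rewrite fcod, fdom, p; reflexivity).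
  rewrite (fcomp pi f g p p'). constructor; auto.
Qed.

Lemma unique_lifting_binary_lists {B E : semicat} (pi : semifunctor E B) :
  unique_lifting_binary pi ->
  forall gs f, gs <> [] -> lcomp_rel gs (fmor pi f) ->
    exists! fs : list (mor E), map (fmor pi) fs = gs /\ lcomp_rel fs f.
Proof.
  intros H4 gs. induction gs as [|g1 gs IH]; intros f Hn Hc; [congruence|].
  destruct gs as [|g2 gs].
  - apply lcomp_rel_single in Hc. exists [f]. split.
    + split; [simpl; rewrite Hc; auto | constructor].
    + intros fs [Hm Hl]. destruct fs as [|a [|b fs]]; try discriminate.
      apply lcomp_rel_single in Hl; subst; auto.
  - destruct (lcomp_rel_cons_inv g1 (g2 :: gs) _ ltac:(discriminate) Hc) as [G [p [HG Heq]]].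
    destruct (H4 f g1 G p (eq_sym Heq)) as [[f1 f2] [[E1 [E2 [q Eq]]] U]].
    simpl in *. subst G.
    destruct (IH f2 ltac:(discriminate) HG) as [fs' [[Hm Hl] U']].
    exists (f1 :: fs'). split.
    + split; [simpl; rewrite E1, Hm; auto|]. rewrite <- Eq. constructor; auto.
    + intros fs [Hm2 Hl2]. destruct fs as [|x xs]; try discriminate.
      simpl in Hm2. injection Hm2 as Hx Hxs.
      destruct (lcomp_rel_cons_inv x xs f) as [X [q' [HX EX]]]; auto.
      { intros ->; discriminate. }
      assert (HpX : fmor pi X = fmor pi f2).
      { eapply lcomp_rel_functional; [apply lcomp_rel_map; eauto | rewrite Hxs; auto]. }
      assert (Hxx : (f1, f2) = (x, X))
        by (apply U; simpl; split; [auto | split; [congruence | exists q'; auto]]).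
      injection Hxx as <- <-. f_equal. apply U'. auto.
Qed.

Lemma unique_lifting_nary_iff_binary {B E : semicat} (pi : semifunctor E B) :
  unique_lifting_nary pi <-> unique_lifting_binary pi.
Proof.
  split.
  - intros H3 f g1 g2 p Hc.
    assert (Hl : lcomp_rel [g1; g2] (fmor pi f)) by (rewrite <- Hc; repeat constructor).
    destruct (H3 f [g1; g2] ltac:(simpl; auto) Hl) as [fs [[Hm Hf] U]].
    destruct fs as [|f1 [|f2 [|]]]; try discriminate.
    simpl in Hm. injection Hm as E1 E2.
    destruct (lcomp_rel_cons_inv f1 [f2] f ltac:(discriminate) Hf) as [G [q [HG ->]]].
    apply lcomp_rel_single in HG; subst G.
    exists (f1, f2). split.
    + simpl; split; auto; split; auto; exists q; auto.
    + intros [a b] [Ea [Eb [q' Eq]]]. simpl in *.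
      assert (Hab : [f1; f2] = [a; b]).
      { apply U. split; [simpl; rewrite Ea, Eb; auto|]. rewrite <- Eq. repeat constructor. }
      injection Hab as -> ->; auto.
  - intros H4 f gs Hlen. apply unique_lifting_binary_lists; auto.
    intros ->; simpl in Hlen; inversion Hlen.
Qed.

(** * Opcartesian cells of Span *)

Definition pjoin : forall {X Y : Type} (p : spath X Y) {Z : Type} (q : spath Y Z)
  (a : apex (pb p)) (c : apex (pb q)), rleg (pb p) a = lleg (pb q) c ->
  { e : apex (pb (sapp p q)) |
      lleg (pb (sapp p q)) e = lleg (pb p) a /\ rleg (pb (sapp p q)) e = rleg (pb q) c }.
Proof.
  intros X Y p. induction p as [X | X Y W Sp p IH]; intros Z q a c h.
  - simpl in *. exists c. auto.
  - simpl in a. destruct a as [[s a'] ha]. simpl in h, ha.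
    destruct (IH Z q a' c h) as [e' [hl hr]].
    refine (exist _ (exist _ (s, e') _) _). simpl. auto.
    Unshelve. exact (eq_trans ha (eq_sym hl)).
Defined.

Lemma psplit_pjoin {X Y : Type} (phi : spath X Y) {Z : Type} (q : spath Y Z) a d h :
  proj1_sig (psplit phi q (proj1_sig (pjoin phi q a d h))) = (a, d).
Proof.
  revert Z q a d h. induction phi as [X | X Y W Sp p IH]; intros Z q a d h.
  - simpl in *. subst a. reflexivity.
  - simpl in a. destruct a as [[s a'] ha]. simpl in h, ha. simpl.
    specialize (IH Z q a' d h).
    destruct (pjoin p q a' d h) as [e' [hl hr]]. simpl in *.
    destruct (psplit p q e') as [[a1 d1] H1]. simpl in *.
    injection IH as -> ->. destruct H1 as [? [? ?]]. simpl. f_equal. apply sig_eq. reflexivity.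
Qed.

Lemma pjoin_psplit {X Y : Type} (phi : spath X Y) {Z : Type} (q : spath Y Z) e a d h :
  proj1_sig (psplit phi q e) = (a, d) -> proj1_sig (pjoin phi q a d h) = e.
Proof.
  revert Z q e a d h. induction phi as [X | X Y W Sp p IH]; intros Z q e a d h Hs.
  - simpl in *. injection Hs as _ ->. reflexivity.
  - simpl in e. destruct e as [[s e1] he]. simpl in Hs.
    pose proof (IH Z q e1) as IH1.
    destruct (psplit p q e1) as [[a1 d1] [H1 [H2 H3]]]. simpl in Hs.
    injection Hs as <- <-. simpl in h.
    specialize (IH1 a1 d1 h eq_refl). simpl.
    destruct (pjoin p q a1 d1 h) as [e' [hl hr]]. simpl in *.
    apply sig_eq. simpl. subst e'. reflexivity.
Qed.

Lemma pb_scons_ext {X Y Z : Type} (Sp : span X Y) (q : spath Y Z) (u v : apex (pb (scons Sp q))) :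
  fst (proj1_sig u) = fst (proj1_sig v) -> snd (proj1_sig u) = snd (proj1_sig v) -> u = v.
Proof.
  intros H1 H2. apply sig_eq. destruct (proj1_sig u), (proj1_sig v); simpl in *; congruence.
Qed.

Section SpanCells.
Context {X Y : Type} (phi : spath X Y) (T : span X Y) (c : apex (pb phi) -> apex T)
  (hc : is_cell phi T (fun x => x) (fun y => y) c).

Local Notation W chi0 chi1 e := (proj1_sig (whisker phi T c hc chi0 chi1 e)).

Lemma whisker_snil {Z : Type} (chi1 : spath Y Z) e :
  fst (proj1_sig (W (snil X) chi1 e)) = c (fst (proj1_sig (psplit phi chi1 e))) /\
  snd (proj1_sig (W (snil X) chi1 e)) = snd (proj1_sig (psplit phi chi1 e)).
Proof.
  simpl. destruct (psplit phi chi1 e) as [[a c1] [h1 [h2 h3]]]. simpl.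
  destruct (hc a). simpl. auto.
Qed.

Lemma whisker_scons {V V' : Type} (Sp : span V V') (chi0 : spath V' X) {Z : Type}
  (chi1 : spath Y Z) e :
  fst (proj1_sig (W (scons Sp chi0) chi1 e)) = fst (proj1_sig e) /\
  snd (proj1_sig (W (scons Sp chi0) chi1 e)) = W chi0 chi1 (snd (proj1_sig e)).
Proof.
  destruct e as [[s e1] h]. simpl.
  destruct (whisker phi T c hc chi0 chi1 e1) as [e1' [hl hr]]. simpl. auto.
Qed.

End SpanCells.

Lemma whisker_injective {V X : Type} (chi0 : spath V X) :
  forall {Y : Type} (phi : spath X Y) (T : span X Y) c hc,
  (forall a1 a2, c a1 = c a2 -> a1 = a2) ->
  forall {Z : Type} (chi1 : spath Y Z) e1 e2,
  proj1_sig (whisker phi T c hc chi0 chi1 e1) = proj1_sig (whisker phi T c hc chi0 chi1 e2) ->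
  e1 = e2.
Proof.
  induction chi0 as [X | V V' X Sp chi0 IH]; intros Y phi T c hc Hinj Z chi1 e1 e2 Heq.
  - destruct (whisker_snil phi T c hc chi1 e1) as [A1 B1].
    destruct (whisker_snil phi T c hc chi1 e2) as [A2 B2].
    rewrite Heq in A1, B1. rewrite A1 in A2. rewrite B1 in B2. apply Hinj in A2.
    assert (HP : proj1_sig (psplit phi chi1 e1) = proj1_sig (psplit phi chi1 e2)).
    { destruct (proj1_sig (psplit phi chi1 e1)), (proj1_sig (psplit phi chi1 e2)).
      simpl in *. congruence. }
    destruct (proj2_sig (psplit phi chi1 e2)) as [h _].
    rewrite <- (pjoin_psplit phi chi1 e1 _ _ h), <- (pjoin_psplit phi chi1 e2 _ _ h);
      [reflexivity | | rewrite HP]; destruct (proj1_sig (psplit phi chi1 e2)); reflexivity.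
  - destruct (whisker_scons phi T c hc Sp chi0 chi1 e1) as [A1 B1].
    destruct (whisker_scons phi T c hc Sp chi0 chi1 e2) as [A2 B2].
    rewrite Heq in A1, B1. rewrite A1 in A2. rewrite B1 in B2.
    apply IH in B2; auto. apply pb_scons_ext; auto.
Qed.

Lemma whisker_surjective {V X : Type} (chi0 : spath V X) :
  forall {Y : Type} (phi : spath X Y) (T : span X Y) c hc,
  (forall t, exists a, c a = t) ->
  forall {Z : Type} (chi1 : spath Y Z) e',
  exists e, proj1_sig (whisker phi T c hc chi0 chi1 e) = e'.
Proof.
  induction chi0 as [X | V V' X Sp chi0 IH]; intros Y phi T c hc Hsur Z chi1 e'.
  - simpl in e'. destruct e' as [[t d] ht]. simpl in ht.
    destruct (Hsur t) as [a <-].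
    assert (h : rleg (pb phi) a = lleg (pb chi1) d) by (rewrite <- ht; symmetry; apply (hc a)).
    exists (proj1_sig (pjoin phi chi1 a d h)).
    destruct (whisker_snil phi T c hc chi1 (proj1_sig (pjoin phi chi1 a d h))) as [A B].
    rewrite psplit_pjoin in A, B.
    apply pb_scons_ext; [rewrite A | rewrite B]; reflexivity.
  - simpl in e'. destruct e' as [[s e1'] h']. simpl in h'.
    destruct (IH Y phi T c hc Hsur Z chi1 e1') as [e1 He1].
    assert (h : rleg Sp s = lleg (pb (sapp chi0 (sapp phi chi1))) e1).
    { rewrite h', <- He1. apply (proj2_sig (whisker phi T c hc chi0 chi1 e1)). }
    exists (exist _ (s, e1) h : apex (pb (sapp (scons Sp chi0) (sapp phi chi1)))).
    destruct (whisker_scons phi T c hc Sp chi0 chi1 (exist _ (s, e1) h)) as [A B].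
    apply pb_scons_ext; [rewrite A | rewrite B; simpl; rewrite He1]; reflexivity.
Qed.

Section SpanOpcartesian.
Context {X Y : Type} (phi : spath X Y) (T : span X Y) (c : apex (pb phi) -> apex T)
  (hc : is_cell phi T (fun x => x) (fun y => y) c).

(* Whiskering a bijective cell is bijective on tuples, so every cell out of the
   whiskered source factors through it by precomposing with the inverse. *)
Lemma span_opcartesian_of_bijective :
  (forall a1 a2, c a1 = c a2 -> a1 = a2) -> (forall t, exists a, c a = t) ->
  span_opcartesian phi T c hc.
Proof.
  intros Hi Hs W chi0 Z chi1 W' Z' R u v b hb.
  destruct (choice _ (whisker_surjective chi0 phi T c hc Hs chi1)) as [inv Hinv].
  assert (Hinv2 : forall e, inv (proj1_sig (whisker phi T c hc chi0 chi1 e)) = e)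
    by (intro e; apply (whisker_injective chi0 phi T c hc Hi chi1), Hinv).
  exists (fun e' => b (inv e')). split; [|split].
  - intro e'. destruct (hb (inv e')) as [h1 h2].
    destruct (proj2_sig (whisker phi T c hc chi0 chi1 (inv e'))) as [k1 k2].
    rewrite Hinv in k1, k2. rewrite h1, h2, k1, k2. auto.
  - intro e. rewrite Hinv2. reflexivity.
  - intros b'' _ Hb'' e'. rewrite <- (Hinv e') at 1. rewrite <- Hb''. reflexivity.
Qed.

Hypothesis hop : span_opcartesian phi T c hc.

Let wsplit (a : apex (pb phi)) : apex (pb (sapp phi (snil Y))) :=
  proj1_sig (pjoin phi (snil Y) a (rleg (pb phi) a) eq_refl).

(* Factoring the identity cell shows that whiskering by empty paths is injective. *)
Lemma span_opcartesian_injective : forall a1 a2, c a1 = c a2 -> a1 = a2.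
Proof.
  intros a1 a2 Hc.
  assert (Hr : rleg (pb phi) a1 = rleg (pb phi) a2).
  { destruct (hc a1) as [_ r1], (hc a2) as [_ r2]. rewrite <- r1, <- r2, Hc. reflexivity. }
  assert (HW : proj1_sig (whisker phi T c hc (snil X) (snil Y) (wsplit a1)) =
               proj1_sig (whisker phi T c hc (snil X) (snil Y) (wsplit a2))).
  { destruct (whisker_snil phi T c hc (snil Y) (wsplit a1)) as [A1 B1].
    destruct (whisker_snil phi T c hc (snil Y) (wsplit a2)) as [A2 B2].
    unfold wsplit in *. rewrite psplit_pjoin in A1, B1, A2, B2.
    apply pb_scons_ext; [rewrite A1, A2 | rewrite B1, B2]; simpl; congruence. }
  destruct (hop X (snil X) Y (snil Y) X Y (pb (sapp phi (snil Y))) (fun x => x) (fun y => y)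
                (fun e => e) (fun e => conj eq_refl eq_refl)) as [b' [_ [Hb' _]]].
  assert (He : wsplit a1 = wsplit a2)
    by (rewrite (Hb' (wsplit a1)), (Hb' (wsplit a2)), HW; reflexivity).
  pose proof (psplit_pjoin phi (snil Y) a1 (rleg (pb phi) a1) eq_refl) as P1.
  pose proof (psplit_pjoin phi (snil Y) a2 (rleg (pb phi) a2) eq_refl) as P2.
  fold (wsplit a1) in P1. fold (wsplit a2) in P2. rewrite He, P2 in P1. congruence.
Qed.

(* Into the span [unit <- Prop -> unit], the constant cell [True] and the cell
   "lies in the image of whiskering" agree after whiskering, so by uniqueness of
   factorisations they agree everywhere. *)
Lemma span_opcartesian_surjective : forall t, exists a, c a = t.
Proof.
  intro t.
  set (R := Build_span (X := unit) (Y := unit) Prop (fun _ => tt) (fun _ => tt)).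
  set (img := fun e' => exists e, proj1_sig (whisker phi T c hc (snil X) (snil Y) e) = e').
  destruct (hop X (snil X) Y (snil Y) unit unit R (fun _ => tt) (fun _ => tt)
                (fun _ => True) (fun _ => conj eq_refl eq_refl)) as [b' [_ [_ U]]].
  assert (Himg : forall e', img e').
  { intro e'.
    assert (Himg_b' : img e' = b' e').
    { apply U; [intros; split; reflexivity|].
      intro e. apply propositional_extensionality. split; [exists e; reflexivity | auto]. }
    rewrite Himg_b', <- (U (fun _ => True)); auto. intros; split; reflexivity. }
  destruct (Himg (exist _ (t, rleg T t) eq_refl : apex (pb (scons T (snil Y))))) as [e He].
  exists (fst (proj1_sig (psplit phi (snil Y) e))).
  destruct (whisker_snil phi T c hc (snil Y) e) as [A _].
  rewrite <- A, He. reflexivity.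
Qed.
End SpanOpcartesian.

(** * The virtual double functor nabla pi *)

Lemma blist_bapp {B : semicat} {x y z : ob B} (a : bpath B x y) (b : bpath B y z) :
  blist (bapp a b) = blist a ++ blist b.
Proof. induction a; simpl; congruence. Qed.

Lemma L_opcartesian_of_LCell {B : semicat} {x y : ob B} (p : bpath B x y) (g : mor B) hd hc :
  LCell p g -> L_opcartesian p g hd hc.
Proof.
  intros Hp w z chi0 chi1 rho _ _ H. unfold LCell in *.
  rewrite blist_bapp in *. simpl. rewrite blist_bapp in H.
  eapply lcomp_rel_app_replace; [| | exact H].
  - intro Hnil. apply app_eq_nil in Hnil. destruct Hnil as [Hnil _].
    rewrite Hnil in Hp. inversion Hp.
  - intros r' Hr. eapply lcomp_rel_compose_prefix; eauto.
Qed.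

Lemma bpath_of_lcomp_rel {B : semicat} (gs : list (mor B)) g :
  lcomp_rel gs g -> exists p : bpath B (dom g) (cod g), blist p = gs.
Proof.
  induction 1 as [f | f l g p H [q Hq]].
  - exists (bcons f eq_refl eq_refl (bnil (cod f))). reflexivity.
  - rewrite comp_cod. exists (bcons f (eq_sym (comp_dom _ f g p)) p q). simpl. congruence.
Qed.

Section Tuples.
Context {B E : semicat} (pi : semifunctor E B).

Lemma tuplist_map {x y : ob B} (p : bpath B x y) t : map (fmor pi) (tuplist pi p t) = blist p.
Proof.
  induction p as [x | x y z f hd hc q IH]; simpl; auto.
  destruct t as [[[m pm] t'] h]. simpl. rewrite pm, IH. reflexivity.
Qed.

Lemma tuplist_nonempty {x y : ob B} (p : bpath B x y) t : blist p <> [] -> tuplist pi p t <> [].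
Proof. intros Hne E0. apply Hne. rewrite <- (tuplist_map p t), E0. reflexivity. Qed.

Lemma tuplist_chain {x y : ob B} (p : bpath B x y) t :
  let e := proj1_sig (lleg (pb (nablap pi p)) t) in
  chain e (tuplist pi p t) /\ proj1_sig (rleg (pb (nablap pi p)) t) = chain_end e (tuplist pi p t).
Proof.
  induction p as [x | x y z f hd hc q IH]; simpl; auto.
  destruct t as [[[m pm] t'] h]. simpl in *.
  destruct (IH t') as [I1 I2].
  assert (Hc : cod m = proj1_sig (lleg (pb (nablap pi q)) t')) by (rewrite <- h; reflexivity).
  rewrite <- Hc in I1, I2. auto.
Qed.

Lemma tuplist_surjective {x y : ob B} (p : bpath B x y) :
  forall fs e (he : fob pi e = x), map (fmor pi) fs = blist p -> chain e fs ->
  exists t, tuplist pi p t = fs /\ proj1_sig (lleg (pb (nablap pi p)) t) = e.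
Proof.
  induction p as [x | x y z f hd hc q IH]; intros fs e he Hm Hc.
  - destruct fs; try discriminate. exists (exist _ e he). auto.
  - destruct fs as [|m fs]; try discriminate. simpl in Hm. injection Hm as Hm1 Hm2.
    destruct Hc as [Hd Hc].
    assert (he' : fob pi (cod m) = y) by (rewrite <- fcod, Hm1; exact hc).
    destruct (IH fs (cod m) he' Hm2 Hc) as [t' [T1 T2]].
    refine (ex_intro _ (exist _ (exist _ m Hm1, t') _) _).
    simpl. split; [congruence | auto].
    Unshelve. apply sig_eq. simpl. auto.
Qed.

Lemma tuplist_injective {x y : ob B} (p : bpath B x y) :
  forall t1 t2, tuplist pi p t1 = tuplist pi p t2 ->
  proj1_sig (lleg (pb (nablap pi p)) t1) = proj1_sig (lleg (pb (nablap pi p)) t2) -> t1 = t2.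
Proof.
  induction p as [x | x y z f hd hc q IH]; intros t1 t2 H1 H2.
  - apply sig_eq. exact H2.
  - destruct t1 as [[[m1 pm1] t1'] h1], t2 as [[[m2 pm2] t2'] h2]. simpl in *.
    injection H1 as -> H1.
    assert (pm1 = pm2) by apply proof_irrelevance. subst pm2.
    assert (t1' = t2') by (apply IH; auto; rewrite <- h1, <- h2; reflexivity).
    subst. apply sig_eq. reflexivity.
Qed.
End Tuples.

Lemma unique_lifting_nary_of_nabla {B E : semicat} (pi : semifunctor E B) :
  nabla_preserves_opcartesian pi -> unique_lifting_nary pi.
Proof.
  intros H2 f gs _ Hc.
  destruct (bpath_of_lcomp_rel gs _ Hc) as [p Hp].
  assert (HL : LCell p (fmor pi f)) by (unfold LCell; rewrite Hp; exact Hc).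
  destruct (H2 _ _ p (fmor pi f) eq_refl eq_refl HL (L_opcartesian_of_LCell p _ _ _ HL))
    as [c [hcell [Htup Hop]]].
  destruct (span_opcartesian_surjective _ _ c hcell Hop (exist _ f eq_refl)) as [t Ht].
  exists (tuplist pi p t). split.
  - split; [rewrite tuplist_map; auto|]. specialize (Htup t). rewrite Ht in Htup. exact Htup.
  - intros fs' [Hm Hl].
    destruct (lcomp_rel_chain _ _ Hl) as [Hch _].
    assert (he : fob pi (dom f) = dom (fmor pi f)) by (symmetry; apply fdom).
    destruct (tuplist_surjective pi p fs' (dom f) he ltac:(rewrite Hm; auto) Hch)
      as [t' [Ht' _]].
    assert (Hct : c t' = c t).
    { rewrite Ht. apply sig_eq. simpl.
      eapply lcomp_rel_functional; [apply Htup | rewrite Ht'; exact Hl]. }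
    apply (span_opcartesian_injective _ _ c hcell Hop) in Hct. subst t'. auto.
Qed.

Section NablaComposite.
Context {B E : semicat} (pi : semifunctor E B) (H4 : unique_lifting_binary pi)
  {x y : ob B} (p : bpath B x y) (g : mor B) (hd : dom g = x) (hc : cod g = y)
  (HL : LCell p g).

Let Tup := apex (pb (nablap pi p)).
Let Over_g := apex (nabla_span pi g x y hd hc).

Lemma blist_nonempty : blist p <> [].
Proof. exact (lcomp_rel_nonempty _ _ HL). Qed.

Lemma tuplist_composite (t : Tup) : exists h, lcomp_rel (tuplist pi p t) h /\ fmor pi h = g.
Proof.
  destruct (tuplist_chain pi p t) as [Hch _].
  destruct (chain_lcomp_rel _ _ Hch (tuplist_nonempty pi p t blist_nonempty)) as [h Hh].
  exists h. split; auto.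
  eapply lcomp_rel_functional; [|exact HL].
  rewrite <- (tuplist_map pi p t). apply lcomp_rel_map; auto.
Qed.

Definition nabla_cell (t : Tup) : Over_g :=
  let H := constructive_indefinite_description _ (tuplist_composite t) in
  exist (fun m => fmor pi m = g) (proj1_sig H) (proj2 (proj2_sig H)).

Lemma nabla_cell_spec t : lcomp_rel (tuplist pi p t) (proj1_sig (nabla_cell t)).
Proof. exact (proj1 (proj2_sig (constructive_indefinite_description _ (tuplist_composite t)))). Qed.

Lemma nabla_cell_dom t : dom (proj1_sig (nabla_cell t)) = proj1_sig (lleg (pb (nablap pi p)) t).
Proof.
  destruct (lcomp_rel_chain _ _ (nabla_cell_spec t)) as [H1 _].
  eapply chain_head; [exact H1 | apply tuplist_chain | apply tuplist_nonempty, blist_nonempty].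
Qed.

Lemma nabla_cell_is_cell :
  is_cell (nablap pi p) (nabla_span pi g x y hd hc) (fun a => a) (fun a => a) nabla_cell.
Proof.
  intro t. split; apply sig_eq; simpl.
  - apply nabla_cell_dom.
  - destruct (lcomp_rel_chain _ _ (nabla_cell_spec t)) as [_ K2].
    destruct (tuplist_chain pi p t) as [_ K3].
    change (cod (proj1_sig (nabla_cell t)) = proj1_sig (rleg (pb (nablap pi p)) t)).
    rewrite K2, K3, nabla_cell_dom. reflexivity.
Qed.

Lemma nabla_cell_injective : forall t1 t2, nabla_cell t1 = nabla_cell t2 -> t1 = t2.
Proof.
  intros t1 t2 Hc. apply tuplist_injective; [| rewrite <- !nabla_cell_dom, Hc; reflexivity].
  assert (Hh1 := nabla_cell_spec t1). assert (Hh2 := nabla_cell_spec t2). rewrite Hc in Hh1.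
  destruct (unique_lifting_binary_lists pi H4 (blist p) (proj1_sig (nabla_cell t2))
              blist_nonempty ltac:(rewrite (proj2_sig (nabla_cell t2)); exact HL)) as [fs [_ U]].
  rewrite <- (U _ (conj (tuplist_map pi p t1) Hh1)).
  apply U. split; [apply tuplist_map | exact Hh2].
Qed.

Lemma nabla_cell_surjective : forall m, exists t, nabla_cell t = m.
Proof.
  intros [m pm].
  destruct (unique_lifting_binary_lists pi H4 (blist p) m blist_nonempty
              ltac:(rewrite pm; exact HL)) as [fs [[Hm Hl] _]].
  destruct (lcomp_rel_chain _ _ Hl) as [Hch _].
  assert (he : fob pi (dom m) = x) by (rewrite <- fdom, pm; exact hd).
  destruct (tuplist_surjective pi p fs (dom m) he Hm Hch) as [t [Ht _]].
  exists t. apply sig_eq. simpl.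
  eapply lcomp_rel_functional; [apply nabla_cell_spec | rewrite Ht; exact Hl].
Qed.
End NablaComposite.

Lemma nabla_preserves_opcartesian_of_binary {B E : semicat} (pi : semifunctor E B) :
  unique_lifting_binary pi -> nabla_preserves_opcartesian pi.
Proof.
  intros H4 x y p g hd hc HL _.
  exists (nabla_cell pi p g hd hc HL), (nabla_cell_is_cell pi p g hd hc HL).
  split; [apply nabla_cell_spec|].
  apply span_opcartesian_of_bijective;
    [apply nabla_cell_injective | apply nabla_cell_surjective]; auto.
Qed.

(** * The exponential under unique lifting *)

Lemma fmor_comp_congr {X Y : semicat} (F : semifunctor X Y) (f g : mor X) (p : cod f = dom g)
  (a b : mor Y) (q : cod a = dom b) :
  fmor F f = a -> fmor F g = b -> fmor F (comp f g p) = comp a b q.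
Proof.
  intros Ha Hb.
  assert (p' : cod (fmor F f) = dom (fmor F g)) by (rewrite fcod, fdom, p; reflexivity).
  rewrite (fcomp F f g p p'). apply comp_congr; assumption.
Qed.

Section Exponential.
Context {B E : semicat} (pi : semifunctor E B) (H4 : unique_lifting_binary pi) (Y : sobj B).
Local Notation Yc := (carrier Y).
Local Notation py := (sproj Y).

(* An object of the exponential over [b] is a map from the fibre of [pi] over [b] to
   the fibre of [Y] over [b]; a morphism over [f] is a map between the fibres over [f]
   commuting with domain and codomain.  Both maps are encoded as functional relations. *)
Definition fibre_map_ok (b : ob B) (rho : ob E -> ob Yc -> Prop) : Prop :=
  (forall e, fob pi e = b -> exists! y, rho e y) /\
  (forall e y, rho e y -> fob pi e = b /\ fob py y = b).

Record expob := ExpOb {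
  expob_base : ob B;
  expob_rel : ob E -> ob Yc -> Prop;
  expob_ok : fibre_map_ok expob_base expob_rel }.

Definition fibre_mor_ok (f : mor B) (s t : expob) (Phi : mor E -> mor Yc -> Prop) : Prop :=
  expob_base s = dom f /\ expob_base t = cod f /\
  (forall m, fmor pi m = f -> exists! y, Phi m y) /\
  (forall m y, Phi m y -> fmor pi m = f /\ fmor py y = f /\
                          expob_rel s (dom m) (dom y) /\ expob_rel t (cod m) (cod y)).

Record expmor := ExpMor {
  expmor_base : mor B;
  expmor_dom : expob;
  expmor_cod : expob;
  expmor_rel : mor E -> mor Yc -> Prop;
  expmor_ok : fibre_mor_ok expmor_base expmor_dom expmor_cod expmor_rel }.

Lemma expob_ext (r r' : expob) : expob_base r = expob_base r' ->
  (forall e y, expob_rel r e y <-> expob_rel r' e y) -> r = r'.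
Proof.
  destruct r as [b rho ok], r' as [b' rho' ok']; simpl. intros <- H.
  assert (rho = rho') as <-.
  { do 2 (apply functional_extensionality; intro). apply propositional_extensionality, H. }
  f_equal. apply proof_irrelevance.
Qed.

Lemma expmor_ext (k k' : expmor) : expmor_base k = expmor_base k' ->
  expmor_dom k = expmor_dom k' -> expmor_cod k = expmor_cod k' ->
  (forall m y, expmor_rel k m y <-> expmor_rel k' m y) -> k = k'.
Proof.
  destruct k as [f s t Phi ok], k' as [f' s' t' Phi' ok']; simpl. intros <- <- <- H.
  assert (Phi = Phi') as <-.
  { do 2 (apply functional_extensionality; intro). apply propositional_extensionality, H. }
  f_equal. apply proof_irrelevance.
Qed.

Lemma expob_rel_functional (r : expob) e y1 y2 :
  expob_rel r e y1 -> expob_rel r e y2 -> y1 = y2.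
Proof.
  destruct r as [b rho [Htot Hsupp]]. simpl. intros H1 H2.
  destruct (Htot e (proj1 (Hsupp e y1 H1))) as [y [_ U]].
  rewrite <- (U y1 H1), <- (U y2 H2). reflexivity.
Qed.

Lemma expmor_rel_functional (k : expmor) m y1 y2 :
  expmor_rel k m y1 -> expmor_rel k m y2 -> y1 = y2.
Proof.
  destruct k as [f s t Phi [Hd [Hc [Htot Hsupp]]]]. simpl. intros H1 H2.
  destruct (Htot m (proj1 (Hsupp m y1 H1))) as [y [_ U]].
  rewrite <- (U y1 H1), <- (U y2 H2). reflexivity.
Qed.

Definition expmor_comp_rel (k k' : expmor) (m : mor E) (y : mor Yc) : Prop :=
  exists m1 m2 (q : cod m1 = dom m2) y1 y2 (q' : cod y1 = dom y2),
    m = comp m1 m2 q /\ y = comp y1 y2 q' /\ expmor_rel k m1 y1 /\ expmor_rel k' m2 y2.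

Lemma expmor_composable (k k' : expmor) :
  expmor_cod k = expmor_dom k' -> cod (expmor_base k) = dom (expmor_base k').
Proof.
  intros H. destruct (expmor_ok k) as [_ [Hc _]], (expmor_ok k') as [Hd _].
  rewrite <- Hc, <- Hd, H. reflexivity.
Qed.

(* The composite relation is functional because the lift of [m] along the
   factorisation of [pi m] is unique. *)
Lemma expmor_comp_ok (k k' : expmor) (p : expmor_cod k = expmor_dom k') :
  fibre_mor_ok (comp (expmor_base k) (expmor_base k') (expmor_composable k k' p))
    (expmor_dom k) (expmor_cod k') (expmor_comp_rel k k').
Proof.
  destruct (expmor_ok k) as [D1 [C1 [T1 S1]]], (expmor_ok k') as [D2 [C2 [T2 S2]]].
  split; [rewrite comp_dom; auto|]. split; [rewrite comp_cod; auto|]. split.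
  - intros m Hm.
    destruct (H4 m _ _ (expmor_composable k k' p) (eq_sym Hm))
      as [[m1 m2] [[E1 [E2 [q Eq]]] U]]. simpl in *.
    destruct (T1 m1 E1) as [y1 [Hy1 _]], (T2 m2 E2) as [y2 [Hy2 _]].
    assert (q' : cod y1 = dom y2).
    { destruct (S1 _ _ Hy1) as [_ [_ [_ R1]]], (S2 _ _ Hy2) as [_ [_ [R2 _]]].
      rewrite p, q in R1. eapply expob_rel_functional; eauto. }
    exists (comp y1 y2 q'). split; [exists m1, m2, q, y1, y2, q'; auto|].
    intros y [n1 [n2 [r [z1 [z2 [r' [En [Ey [Hz1 Hz2]]]]]]]]].
    destruct (S1 _ _ Hz1) as [F1 _], (S2 _ _ Hz2) as [F2 _].
    assert (Hn : (m1, m2) = (n1, n2)) by (apply U; simpl; repeat split; auto; exists r; congruence).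
    injection Hn as <- <-.
    rewrite Ey. apply comp_congr; eapply expmor_rel_functional; eauto.
  - intros m y [m1 [m2 [q [y1 [y2 [q' [-> [-> [Hy1 Hy2]]]]]]]]].
    destruct (S1 _ _ Hy1) as [F1 [G1 [R1 R1']]], (S2 _ _ Hy2) as [F2 [G2 [R2 R2']]].
    repeat split; [apply fmor_comp_congr; auto | apply fmor_comp_congr; auto | |];
      rewrite ?comp_dom, ?comp_cod; auto.
Qed.

Definition expmor_comp (k k' : expmor) (p : expmor_cod k = expmor_dom k') : expmor :=
  ExpMor (comp (expmor_base k) (expmor_base k') (expmor_composable k k' p))
    (expmor_dom k) (expmor_cod k') (expmor_comp_rel k k') (expmor_comp_ok k k' p).

Lemma expmor_comp_assoc (k1 k2 k3 : expmor) (p : expmor_cod k1 = expmor_dom k2)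
  (q : expmor_cod k2 = expmor_dom k3) (p' : expmor_cod (expmor_comp k1 k2 p) = expmor_dom k3)
  (q' : expmor_cod k1 = expmor_dom (expmor_comp k2 k3 q)) :
  expmor_comp (expmor_comp k1 k2 p) k3 p' = expmor_comp k1 (expmor_comp k2 k3 q) q'.
Proof.
  apply expmor_ext; try reflexivity; [apply comp_assoc|].
  intros m y. simpl. split.
  - intros [m12 [m3 [r [y12 [y3 [r' [-> [-> [H12 H3]]]]]]]]].
    destruct H12 as [m1 [m2 [s [y1 [y2 [s' [-> [-> [H1 H2]]]]]]]]].
    assert (t1 : cod m2 = dom m3) by (rewrite <- r, comp_cod; reflexivity).
    assert (t1' : cod y2 = dom y3) by (rewrite <- r', comp_cod; reflexivity).
    assert (t2 : cod m1 = dom (comp m2 m3 t1)) by (rewrite comp_dom; exact s).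
    assert (t2' : cod y1 = dom (comp y2 y3 t1')) by (rewrite comp_dom; exact s').
    exists m1, (comp m2 m3 t1), t2, y1, (comp y2 y3 t1'), t2'.
    repeat split; try apply comp_assoc; auto.
    exists m2, m3, t1, y2, y3, t1'. auto.
  - intros [m1 [m23 [r [y1 [y23 [r' [-> [-> [H1 H23]]]]]]]]].
    destruct H23 as [m2 [m3 [s [y2 [y3 [s' [-> [-> [H2 H3]]]]]]]]].
    assert (t1 : cod m1 = dom m2) by (rewrite r, comp_dom; reflexivity).
    assert (t1' : cod y1 = dom y2) by (rewrite r', comp_dom; reflexivity).
    assert (t2 : cod (comp m1 m2 t1) = dom m3) by (rewrite comp_cod; exact s).
    assert (t2' : cod (comp y1 y2 t1') = dom y3) by (rewrite comp_cod; exact s').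
    exists (comp m1 m2 t1), m3, t2, (comp y1 y2 t1'), y3, t2'.
    repeat split; try (symmetry; apply comp_assoc); auto.
    exists m1, m2, t1, y1, y2, t1'. auto.
Qed.

Definition exp_sc : semicat :=
  {| ob := expob; mor := expmor; dom := expmor_dom; cod := expmor_cod; comp := expmor_comp;
     comp_dom := fun _ _ _ => eq_refl; comp_cod := fun _ _ _ => eq_refl;
     comp_assoc := expmor_comp_assoc |}.

Definition exp_proj : semifunctor exp_sc B.
Proof.
  refine {| fob := (expob_base : ob exp_sc -> ob B);
            fmor := (expmor_base : mor exp_sc -> mor B) |}.
  - intro k. symmetry. apply (expmor_ok k).
  - intro k. symmetry. apply (expmor_ok k).
  - intros k k' p p'. apply comp_pi.
Defined.

Definition exp_sobj : sobj B := Build_sobj exp_sc exp_proj.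

Definition eval_ob (r : expob) (e : ob E) (he : expob_base r = fob pi e) : ob Yc :=
  proj1_sig (constructive_definite_description _ (proj1 (expob_ok r) e (eq_sym he))).

Lemma eval_ob_spec r e he : expob_rel r e (eval_ob r e he).
Proof. exact (proj2_sig (constructive_definite_description _ _)). Qed.

Lemma eval_ob_unique r e he y : expob_rel r e y -> y = eval_ob r e he.
Proof. intros H. eapply expob_rel_functional; [exact H | apply eval_ob_spec]. Qed.

Definition eval_mor (k : expmor) (m : mor E) (hm : expmor_base k = fmor pi m) : mor Yc :=
  proj1_sig (constructive_definite_description _
    (proj1 (proj2 (proj2 (expmor_ok k))) m (eq_sym hm))).

Lemma eval_mor_spec k m hm : expmor_rel k m (eval_mor k m hm).
Proof. exact (proj2_sig (constructive_definite_description _ _)). Qed.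

Lemma eval_mor_unique k m hm y : expmor_rel k m y -> y = eval_mor k m hm.
Proof. intros H. eapply expmor_rel_functional; [exact H | apply eval_mor_spec]. Qed.

Lemma eval_mor_support k m hm :
  fmor py (eval_mor k m hm) = expmor_base k /\
  expob_rel (expmor_dom k) (dom m) (dom (eval_mor k m hm)) /\
  expob_rel (expmor_cod k) (cod m) (cod (eval_mor k m hm)).
Proof. apply (proj2 (proj2 (proj2 (expmor_ok k))) _ _ (eval_mor_spec k m hm)). Qed.

Definition exp_eval : semifunctor (pbc pi exp_sobj) Yc.
Proof.
  refine {| fob := fun u : ob (pbc pi exp_sobj) =>
              eval_ob (fst (proj1_sig (u : pbob pi exp_sobj)))
                (snd (proj1_sig (u : pbob pi exp_sobj))) (proj2_sig (u : pbob pi exp_sobj));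
            fmor := fun u : mor (pbc pi exp_sobj) =>
              eval_mor (fst (proj1_sig (u : pbmor pi exp_sobj)))
                (snd (proj1_sig (u : pbmor pi exp_sobj))) (proj2_sig (u : pbmor pi exp_sobj)) |}.
  - intros [[k m] hm]. apply eval_ob_unique, (eval_mor_support k m hm).
  - intros [[k m] hm]. apply eval_ob_unique, (eval_mor_support k m hm).
  - intros [[k m] hm] [[k' m'] hm'] h p'. simpl in *.
    symmetry. apply eval_mor_unique.
    exists m, m', (f_equal (fun o => snd (proj1_sig o)) h), (eval_mor k m hm),
      (eval_mor k' m' hm'), p'.
    repeat split; apply eval_mor_spec.
Defined.

Lemma exp_eval_over : over (pbobj pi exp_sobj) Y exp_eval.
Proof.
  split.
  - intros [[r e] he]. apply (proj2 (expob_ok r) _ _ (eval_ob_spec r e he)).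
  - intros [[k m] hm]. apply (eval_mor_support k m hm).
Qed.

Section Transpose.
Context (X : sobj B) (h : semifunctor (pbc pi X) Yc) (hh : over (pbobj pi X) Y h).
Local Notation pX := (sproj X).

Definition transpose_rel (x : ob (carrier X)) (e : ob E) (y : ob Yc) : Prop :=
  exists p : fob pX x = fob pi e, y = fob h (exist _ (x, e) p : ob (pbc pi X)).

Lemma transpose_rel_ok x : fibre_map_ok (fob pX x) (transpose_rel x).
Proof.
  split.
  - intros e He. exists (fob h (exist _ (x, e) (eq_sym He) : ob (pbc pi X))). split.
    + exists (eq_sym He). reflexivity.
    + intros y [p ->]. f_equal. apply pbob_eq. reflexivity.
  - intros e y [p ->]. split; [auto|]. apply (proj1 hh (exist _ (x, e) p : ob (pbc pi X))).
Qed.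

Definition transpose_ob x : expob := ExpOb (fob pX x) (transpose_rel x) (transpose_rel_ok x).

Definition transpose_mor_rel (k : mor (carrier X)) (m : mor E) (y : mor Yc) : Prop :=
  exists p : fmor pX k = fmor pi m, y = fmor h (exist _ (k, m) p : mor (pbc pi X)).

Lemma transpose_mor_rel_ok k :
  fibre_mor_ok (fmor pX k) (transpose_ob (dom k)) (transpose_ob (cod k)) (transpose_mor_rel k).
Proof.
  split; [symmetry; apply fdom|]. split; [symmetry; apply fcod|]. split.
  - intros m Hm. exists (fmor h (exist _ (k, m) (eq_sym Hm) : mor (pbc pi X))). split.
    + exists (eq_sym Hm). reflexivity.
    + intros y [p ->]. f_equal. apply pbmor_eq. reflexivity.
  - intros m y [p ->]. split; [auto|].
    split; [apply (proj2 hh (exist _ (k, m) p : mor (pbc pi X)))|].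
    split; simpl.
    + exists (proj2_sig (pbdom _ _ pi X (exist _ (k, m) p))).
      rewrite (fdom h). f_equal; apply pbob_eq; reflexivity.
    + exists (proj2_sig (pbcod _ _ pi X (exist _ (k, m) p))).
      rewrite (fcod h). f_equal; apply pbob_eq; reflexivity.
Qed.

Definition transpose_mor k : expmor :=
  ExpMor (fmor pX k) (transpose_ob (dom k)) (transpose_ob (cod k)) (transpose_mor_rel k)
    (transpose_mor_rel_ok k).

Lemma transpose_mor_rel_comp k k' (p : cod k = dom k') m y :
  transpose_mor_rel (comp k k' p) m y <->
  expmor_comp_rel (transpose_mor k) (transpose_mor k') m y.
Proof.
  split.
  - intros [q ->].
    assert (q0 : cod (fmor pX k) = dom (fmor pX k')) by (rewrite fcod, fdom, p; reflexivity).
    assert (q2 : fmor pi m = comp (fmor pX k) (fmor pX k') q0) by (rewrite <- q; apply fcomp).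
    destruct (H4 m _ _ q0 (eq_sym q2)) as [[m1 m2] [[E1 [E2 [r Er]]] _]]. simpl in *.
    set (u1 := exist _ (k, m1) (eq_sym E1) : mor (pbc pi X)).
    set (u2 := exist _ (k', m2) (eq_sym E2) : mor (pbc pi X)).
    assert (huv : pbcod _ _ pi X u1 = pbdom _ _ pi X u2)
      by (apply pbob_eq; simpl; rewrite p, r; reflexivity).
    assert (r' : cod (fmor h u1) = dom (fmor h u2)) by (rewrite fcod, fdom; f_equal; exact huv).
    exists m1, m2, r, (fmor h u1), (fmor h u2), r'.
    repeat split; [auto | | exists (eq_sym E1) | exists (eq_sym E2)]; try reflexivity.
    rewrite <- (fcomp h u1 u2 huv r'). f_equal. apply pbmor_eq. simpl. f_equal.
    + apply comp_pi.
    + rewrite <- Er. apply comp_pi.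
  - intros [m1 [m2 [r [y1 [y2 [r' [-> [-> [[p1 ->] [p2 ->]]]]]]]]]].
    set (u1 := exist _ (k, m1) p1 : mor (pbc pi X)).
    set (u2 := exist _ (k', m2) p2 : mor (pbc pi X)).
    assert (huv : pbcod _ _ pi X u1 = pbdom _ _ pi X u2)
      by (apply pbob_eq; simpl; rewrite p, r; reflexivity).
    assert (q0 : fmor pX (comp k k' p) = fmor pi (comp m1 m2 r)).
    { assert (a : cod (fmor pi m1) = dom (fmor pi m2)) by (rewrite fcod, fdom, r; reflexivity).
      rewrite (fcomp pi m1 m2 r a). apply fmor_comp_congr; auto. }
    exists q0. rewrite <- (fcomp h u1 u2 huv r'). f_equal.
    apply pbmor_eq. simpl. f_equal; apply comp_pi.
Qed.

Definition exp_transpose : semifunctor (carrier X) exp_sc.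
Proof.
  refine {| fob := (transpose_ob : ob (carrier X) -> ob exp_sc);
            fmor := (transpose_mor : mor (carrier X) -> mor exp_sc) |}.
  - intro k. reflexivity.
  - intro k. reflexivity.
  - intros k k' p p'. apply expmor_ext; simpl.
    + apply fcomp.
    + rewrite comp_dom. reflexivity.
    + rewrite comp_cod. reflexivity.
    + apply transpose_mor_rel_comp.
Defined.

Lemma exp_transpose_over : over X exp_sobj exp_transpose.
Proof. split; intros; reflexivity. Qed.

Lemma exp_eval_transpose :
  sfeq (sfcomp (pbmap pi (X' := exp_sobj) exp_transpose exp_transpose_over) exp_eval) h.
Proof.
  split.
  - intros [[x e] p]. symmetry. apply eval_ob_unique. exists p. reflexivity.
  - intros [[k m] p]. symmetry. apply eval_mor_unique. exists p. reflexivity.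
Qed.

Section Uniqueness.
Context (h' : semifunctor (carrier X) (carrier exp_sobj)) (hh' : over X exp_sobj h')
  (Hh' : sfeq (sfcomp (pbmap pi h' hh') exp_eval) h).

Lemma exp_transpose_unique_ob x : fob h' x = transpose_ob x.
Proof.
  apply expob_ext; [apply (proj1 hh' x)|].
  intros e y. simpl. unfold transpose_rel. split.
  - intros Hr.
    assert (p : fob (sproj X) x = fob pi e).
    { rewrite <- (proj1 hh' x). symmetry. exact (proj1 (proj2 (expob_ok _) e y Hr)). }
    exists p. rewrite <- (proj1 Hh' (exist _ (x, e) p : ob (pbc pi X))).
    apply eval_ob_unique. exact Hr.
  - intros [p ->]. rewrite <- (proj1 Hh' (exist _ (x, e) p : ob (pbc pi X))).
    apply eval_ob_spec.
Qed.

Lemma exp_transpose_unique : sfeq h' exp_transpose.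
Proof.
  split; [exact exp_transpose_unique_ob|].
  intro k. apply expmor_ext.
  - apply (proj2 hh' k).
  - change (dom (fmor h' k) = transpose_ob (dom k)). rewrite fdom. apply exp_transpose_unique_ob.
  - change (cod (fmor h' k) = transpose_ob (cod k)). rewrite fcod. apply exp_transpose_unique_ob.
  - intros m y. simpl. unfold transpose_mor_rel. split.
    + intros Hr.
      assert (p : fmor (sproj X) k = fmor pi m).
      { rewrite <- (proj2 hh' k). symmetry.
        exact (proj1 (proj2 (proj2 (proj2 (expmor_ok _))) m y Hr)). }
      exists p. rewrite <- (proj2 Hh' (exist _ (k, m) p : mor (pbc pi X))).
      apply eval_mor_unique. exact Hr.
    + intros [p ->]. rewrite <- (proj2 Hh' (exist _ (k, m) p : mor (pbc pi X))).
      apply eval_mor_spec.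
Qed.
End Uniqueness.
End Transpose.
End Exponential.

Lemma exponentiable_of_binary {B E : semicat} (pi : semifunctor E B) :
  unique_lifting_binary pi -> exponentiable pi.
Proof.
  intros H4 Y. exists (exp_sobj pi H4 Y), (exp_eval pi H4 Y).
  split; [apply exp_eval_over|].
  intros X h hh. exists (exp_transpose pi H4 Y X h hh), (exp_transpose_over pi H4 Y X h hh).
  split; [apply exp_eval_transpose|].
  intros h'' hh'' Hs. exact (exp_transpose_unique pi H4 Y X h hh h'' hh'' Hs).
Qed.

(** * Exponentiability forces unique lifting *)

Section SemifunctorEquality.
Context {X Y Z : semicat}.

Lemma sfeq_refl (F : semifunctor X Y) : sfeq F F.
Proof. split; reflexivity. Qed.

Lemma sfeq_sym (F G : semifunctor X Y) : sfeq F G -> sfeq G F.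
Proof. intros [H1 H2]; split; intro; symmetry; auto. Qed.

Lemma sfeq_trans (F G H : semifunctor X Y) : sfeq F G -> sfeq G H -> sfeq F H.
Proof. intros [F1 F2] [G1 G2]; split; intro; [rewrite F1 | rewrite F2]; auto. Qed.

Lemma sfcomp_sfeq (F F' : semifunctor X Y) (G G' : semifunctor Y Z) :
  sfeq F F' -> sfeq G G' -> sfeq (sfcomp F G) (sfcomp F' G').
Proof. intros [F1 F2] [G1 G2]; split; intro; cbn; [rewrite F1 | rewrite F2]; auto. Qed.
End SemifunctorEquality.

Definition sfid (X : semicat) : semifunctor X X.
Proof.
  refine {| fob := fun x => x; fmor := fun f => f |}; auto.
  intros; apply comp_pi.
Defined.

Lemma over_id {B : semicat} (X : sobj B) : over X X (sfid (carrier X)).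
Proof. split; reflexivity. Qed.

Lemma over_comp {B : semicat} (X Y Z : sobj B) f g :
  over X Y f -> over Y Z g -> over X Z (sfcomp f g).
Proof.
  intros [A1 A2] [B1 B2].
  split; intro; [exact (eq_trans (B1 _) (A1 _)) | exact (eq_trans (B2 _) (A2 _))].
Qed.

Section PullbackFunctor.
Context {B E : semicat} (pi : semifunctor E B).

Lemma pbmap_over (X X' : sobj B) k hk :
  over (pbobj pi X) (pbobj pi X') (pbmap pi (X := X) (X' := X') k hk).
Proof. destruct hk as [H1 H2]. split; intro; [apply H1 | apply H2]. Qed.

Lemma pbmap_sfcomp (X1 X2 X3 : sobj B) f hf g hg hfg :
  sfeq (sfcomp (pbmap pi (X := X1) (X' := X2) f hf) (pbmap pi (X := X2) (X' := X3) g hg))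
       (pbmap pi (sfcomp f g) hfg).
Proof. split; intro; [apply pbob_eq | apply pbmor_eq]; reflexivity. Qed.

Lemma pbmap_sfeq (X X' : sobj B) k hk k' hk' :
  sfeq k k' -> sfeq (pbmap pi (X := X) (X' := X') k hk) (pbmap pi k' hk').
Proof.
  intros [H1 H2]. split; intro u; [apply pbob_eq | apply pbmor_eq]; simpl;
    [rewrite H1 | rewrite H2]; reflexivity.
Qed.

Definition couniversal (Y R : sobj B) (eps : semifunctor (pbc pi R) (carrier Y)) : Prop :=
  over (pbobj pi R) Y eps /\
  forall (X : sobj B) (h : semifunctor (pbc pi X) (carrier Y)),
    over (pbobj pi X) Y h ->
    exists (h' : semifunctor (carrier X) (carrier R)) (hh' : over X R h'),
      sfeq (sfcomp (pbmap pi h' hh') eps) h /\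
      forall (h'' : semifunctor (carrier X) (carrier R)) (hh'' : over X R h''),
        sfeq (sfcomp (pbmap pi h'' hh'') eps) h -> sfeq h'' h'.

Section Transposes.
Context (Y R : sobj B) (eps : semifunctor (pbc pi R) (carrier Y)) (Hcu : couniversal Y R eps).

Lemma couniversal_transpose (X : sobj B) h :
  over (pbobj pi X) Y h -> exists k hk, sfeq (sfcomp (pbmap pi (X := X) (X' := R) k hk) eps) h.
Proof. intros hh. destruct (proj2 Hcu X h hh) as [k [hk [Hk _]]]. eauto. Qed.

Lemma couniversal_transpose_injective (X : sobj B) k1 hk1 k2 hk2 :
  sfeq (sfcomp (pbmap pi (X := X) (X' := R) k1 hk1) eps) (sfcomp (pbmap pi k2 hk2) eps) ->
  sfeq k1 k2.
Proof.
  intros H12.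
  assert (hh : over (pbobj pi X) Y (sfcomp (pbmap pi k1 hk1) eps))
    by (apply over_comp with (Y := pbobj pi R); [apply pbmap_over | exact (proj1 Hcu)]).
  destruct (proj2 Hcu X _ hh) as [k [hk [_ U]]].
  apply sfeq_trans with k;
    [apply (U k1 hk1), sfeq_refl | apply sfeq_sym, (U k2 hk2), sfeq_sym, H12].
Qed.

Lemma couniversal_transpose_natural (X X' : sobj B) io hio k hk hiok H :
  sfeq (sfcomp (pbmap pi (X := X') (X' := R) k hk) eps) H ->
  sfeq (sfcomp (pbmap pi (sfcomp io k) hiok) eps)
       (sfcomp (pbmap pi (X := X) (X' := X') io hio) H).
Proof.
  intros Hk. apply sfeq_trans with (sfcomp (pbmap pi io hio) (sfcomp (pbmap pi k hk) eps)).
  - apply sfeq_sym. split; intro; [apply (f_equal (fob eps)) | apply (f_equal (fmor eps))];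
      [apply (proj1 (pbmap_sfcomp _ _ _ io hio k hk hiok)) |
       apply (proj2 (pbmap_sfcomp _ _ _ io hio k hk hiok))].
  - apply sfcomp_sfeq; [apply sfeq_refl | exact Hk].
Qed.
End Transposes.
End PullbackFunctor.

Definition point_sc : semicat.
Proof.
  refine {| ob := unit; mor := Empty_set; dom := fun f => match f with end;
            cod := fun f => match f with end; comp := fun f g _ => match f with end |};
  intros f; destruct f.
Defined.

Definition arrow_sc : semicat.
Proof.
  refine {| ob := bool; mor := unit; dom := fun _ => false; cod := fun _ => true;
            comp := fun _ _ _ => tt |}; reflexivity.
Defined.

Inductive pair_ob := v0 | v1 | v2.
Inductive pair_mor := a01 | a12 | a02.

Definition pair_dom (m : pair_mor) : pair_ob := match m with a01 => v0 | a12 => v1 | a02 => v0 end.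
Definition pair_cod (m : pair_mor) : pair_ob := match m with a01 => v1 | a12 => v2 | a02 => v2 end.

(* The free semicategory on two composable arrows: [a01 . a12 = a02] is the only
   composable pair, so a constant composition is correct. *)
Definition pair_sc : semicat.
Proof.
  refine {| ob := pair_ob; mor := pair_mor; dom := pair_dom; cod := pair_cod;
            comp := fun _ _ _ => a02 |}.
  - intros [] [] p; simpl in *; try discriminate; reflexivity.
  - intros [] [] p; simpl in *; try discriminate; reflexivity.
  - reflexivity.
Defined.

Definition pair_first : semifunctor arrow_sc pair_sc.
Proof.
  refine (@Build_semifunctor arrow_sc pair_sc (fun b : bool => if b then v1 else v0)
            (fun _ => a01) _ _ _); try reflexivity.
  intros f f' p. discriminate p.
Defined.

Definition pair_second : semifunctor arrow_sc pair_sc.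
Proof.
  refine (@Build_semifunctor arrow_sc pair_sc (fun b : bool => if b then v2 else v1)
            (fun _ => a12) _ _ _); try reflexivity.
  intros f f' p. discriminate p.
Defined.

Section PairFunctors.
Context {Z : semicat}.

Lemma pair_sfeq (F G : semifunctor pair_sc Z) :
  sfeq (sfcomp pair_first F) (sfcomp pair_first G) ->
  sfeq (sfcomp pair_second F) (sfcomp pair_second G) -> sfeq F G.
Proof.
  intros [Ao Am] [Co Cm]. split.
  - intros []; [apply (Ao false) | apply (Ao true) | apply (Co true)].
  - intros []; [apply (Am tt) | apply (Cm tt)|].
    assert (q1 : cod (fmor G a01) = dom (fmor G a12)) by (rewrite fcod, fdom; reflexivity).
    exact (eq_trans (fmor_comp_congr F a01 a12 eq_refl _ _ q1 (Am tt) (Cm tt))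
                    (eq_sym (fcomp G a01 a12 eq_refl q1))).
Qed.

Context (al be : semifunctor arrow_sc Z) (mid : fob al true = fob be false).

Lemma pair_glue_composable : cod (fmor al tt) = dom (fmor be tt).
Proof. rewrite fcod, fdom. exact mid. Qed.

Definition pair_glue : semifunctor pair_sc Z.
Proof.
  refine (@Build_semifunctor pair_sc Z
    (fun o => match o with v0 => fob al false | v1 => fob al true | v2 => fob be true end)
    (fun m => match m with
              | a01 => fmor al tt | a12 => fmor be tt
              | a02 => comp (fmor al tt) (fmor be tt) pair_glue_composable end) _ _ _).
  - intros []; simpl; rewrite ?comp_dom, ?fdom; auto.
  - intros []; simpl; rewrite ?comp_cod, ?fcod; auto.
  - intros [] [] p p'; simpl in *; try discriminate. apply comp_pi.
Defined.

Lemma pair_glue_first : sfeq (sfcomp pair_first pair_glue) al.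
Proof. split; intros []; reflexivity. Qed.

Lemma pair_glue_second : sfeq (sfcomp pair_second pair_glue) be.
Proof. split; intros []; [reflexivity | exact mid | reflexivity]. Qed.
End PairFunctors.

Section TestObjects.
Context {B : semicat}.

Definition point_over (b : ob B) : sobj B.
Proof.
  refine (Build_sobj point_sc
    {| fob := fun _ => b; fmor := fun f : mor point_sc => match f with end |});
  intros f; destruct f.
Defined.

Definition arrow_over (g : mor B) : sobj B.
Proof.
  refine (Build_sobj arrow_sc {| fob := fun b : ob arrow_sc => if b then cod g else dom g;
                                 fmor := fun _ : mor arrow_sc => g |}); try reflexivity.
  intros f f' p. discriminate p.
Defined.

Definition arrow_target : semifunctor point_sc arrow_sc.
Proof.
  refine (@Build_semifunctor point_sc arrow_sc (fun _ => true) (fun f => match f with end) _ _ _);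
  intros f; destruct f.
Defined.

Definition arrow_source : semifunctor point_sc arrow_sc.
Proof.
  refine (@Build_semifunctor point_sc arrow_sc (fun _ => false) (fun f => match f with end) _ _ _);
  intros f; destruct f.
Defined.

Lemma arrow_target_over (b : ob B) g : b = cod g -> over (point_over b) (arrow_over g) arrow_target.
Proof. intros Hb. split; intros []; auto. Qed.

Lemma arrow_source_over (b : ob B) g : b = dom g -> over (point_over b) (arrow_over g) arrow_source.
Proof. intros Hb. split; intros []; auto. Qed.

Context (g1 g2 : mor B) (pg : cod g1 = dom g2).

Definition pair_over : sobj B.
Proof.
  refine (Build_sobj pair_sc
    {| fob := fun o : ob pair_sc => match o with v0 => dom g1 | v1 => cod g1 | v2 => cod g2 end;
       fmor := fun m : mor pair_sc =>
                 match m with a01 => g1 | a12 => g2 | a02 => comp g1 g2 pg end |}).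
  - intros []; simpl; [reflexivity | exact (eq_sym pg) | apply comp_dom].
  - intros []; simpl; [reflexivity | reflexivity | apply comp_cod].
  - intros [] [] p p'; simpl in *; try discriminate. apply comp_pi.
Defined.

Lemma pair_first_over : over (arrow_over g1) pair_over pair_first.
Proof. split; intros []; reflexivity. Qed.

Lemma pair_second_over : over (arrow_over g2) pair_over pair_second.
Proof. split; intros []; simpl; auto. Qed.

Lemma pair_glue_over (R : sobj B) al be mid :
  over (arrow_over g1) R al -> over (arrow_over g2) R be -> over pair_over R (pair_glue al be mid).
Proof.
  intros [A1 A2] [B1 B2]. split.
  - intros []; [apply (A1 false) | apply (A1 true) | apply (B1 true)].
  - intros []; [apply (A2 tt) | apply (B2 tt) |].
    exact (fmor_comp_congr (sproj R) _ _ _ _ _ _ (A2 tt) (B2 tt)).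
Qed.
End TestObjects.

Section PairPullback.
Context {B E : semicat} (pi : semifunctor E B) (Hexp : exponentiable pi)
  (g1 g2 : mor B) (pg : cod g1 = dom g2).
Local Notation P3 := (pair_over g1 g2 pg).

Lemma pair_pullback_sfeq (Y : sobj B) (H1 H2 : semifunctor (pbc pi P3) (carrier Y)) :
  over (pbobj pi P3) Y H1 -> over (pbobj pi P3) Y H2 ->
  (forall x, fob H1 x = fob H2 x) ->
  (forall u : mor (pbc pi P3), fst (proj1_sig (u : pbmor pi P3)) <> a02 -> fmor H1 u = fmor H2 u) ->
  sfeq H1 H2.
Proof.
  intros ho1 ho2 Hob Hmor.
  destruct (Hexp Y) as [R [eps Hcu]].
  destruct (couniversal_transpose pi Y R eps Hcu P3 H1 ho1) as [k1 [hk1 Hk1]].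
  destruct (couniversal_transpose pi Y R eps Hcu P3 H2 ho2) as [k2 [hk2 Hk2]].
  assert (Hrestr : forall g (io : semifunctor (carrier (arrow_over g)) (carrier P3))
                          (hio : over (arrow_over g) P3 io),
    (forall u, fst (proj1_sig (fmor (pbmap pi io hio) u : pbmor pi P3)) <> a02) ->
    sfeq (sfcomp io k1) (sfcomp io k2)).
  { intros g io hio Hne.
    apply (couniversal_transpose_injective pi Y R eps Hcu (arrow_over g) _
             (over_comp _ _ _ _ _ hio hk1) _ (over_comp _ _ _ _ _ hio hk2)).
    eapply sfeq_trans;
      [apply (couniversal_transpose_natural pi Y R eps _ _ _ hio _ hk1); exact Hk1|].
    eapply sfeq_trans;
      [|apply sfeq_sym, (couniversal_transpose_natural pi Y R eps _ _ _ hio _ hk2); exact Hk2].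
    split; intro u; [apply Hob | apply Hmor, Hne]. }
  assert (Hk : sfeq k1 k2).
  { apply pair_sfeq; [apply (Hrestr g1 _ (pair_first_over g1 g2 pg)) |
                      apply (Hrestr g2 _ (pair_second_over g1 g2 pg))];
      intros u; simpl; discriminate. }
  eapply sfeq_trans; [apply sfeq_sym, Hk1|]. eapply sfeq_trans; [|apply Hk2].
  apply sfcomp_sfeq; [apply pbmap_sfeq, Hk | apply sfeq_refl].
Qed.

Lemma pair_pullback_glue (Y : sobj B)
  (Ha : semifunctor (pbc pi (arrow_over g1)) (carrier Y))
  (hHa : over (pbobj pi (arrow_over g1)) Y Ha)
  (Hc : semifunctor (pbc pi (arrow_over g2)) (carrier Y))
  (hHc : over (pbobj pi (arrow_over g2)) Y Hc) :
  (forall (e : ob E) p p', fob Ha (exist _ (true, e) p : ob (pbc pi (arrow_over g1))) =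
                           fob Hc (exist _ (false, e) p' : ob (pbc pi (arrow_over g2)))) ->
  exists (H : semifunctor (pbc pi P3) (carrier Y)) (hH : over (pbobj pi P3) Y H),
    sfeq (sfcomp (pbmap pi (X := arrow_over g1) (X' := P3) pair_first
                    (pair_first_over g1 g2 pg)) H) Ha /\
    sfeq (sfcomp (pbmap pi (X := arrow_over g2) (X' := P3) pair_second
                    (pair_second_over g1 g2 pg)) H) Hc.
Proof.
  intros Hmid.
  destruct (Hexp Y) as [R [eps Hcu]].
  destruct (couniversal_transpose pi Y R eps Hcu _ Ha hHa) as [al [hal Hal]].
  destruct (couniversal_transpose pi Y R eps Hcu _ Hc hHc) as [be [hbe Hbe]].
  assert (mid : fob al true = fob be false).
  { pose proof (arrow_target_over (cod g1) g1 eq_refl) as ht.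
    pose proof (arrow_source_over (cod g1) g2 pg) as hs.
    refine (proj1 (couniversal_transpose_injective pi Y R eps Hcu (point_over (cod g1)) _
                     (over_comp _ _ _ _ _ ht hal) _ (over_comp _ _ _ _ _ hs hbe) _) tt).
    eapply sfeq_trans;
      [apply (couniversal_transpose_natural pi Y R eps _ _ _ ht _ hal); exact Hal|].
    eapply sfeq_trans;
      [|apply sfeq_sym, (couniversal_transpose_natural pi Y R eps _ _ _ hs _ hbe); exact Hbe].
    split; [intros [[[] e] p]; apply Hmid | intros [[[] _] _]]. }
  pose proof (pair_glue_over g1 g2 pg R al be mid hal hbe) as hk.
  exists (sfcomp (pbmap pi (X := P3) (pair_glue al be mid) hk) eps).
  exists (over_comp _ _ _ _ _ (pbmap_over pi _ _ _ hk) (proj1 Hcu)).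
  split.
  - eapply sfeq_trans; [apply sfeq_sym, (couniversal_transpose_natural pi Y R eps _ _ _
                          (pair_first_over g1 g2 pg) _ hk
                          (over_comp _ _ _ _ _ (pair_first_over g1 g2 pg) hk)), sfeq_refl|].
    eapply sfeq_trans; [|exact Hal].
    apply sfcomp_sfeq; [apply pbmap_sfeq, pair_glue_first | apply sfeq_refl].
  - eapply sfeq_trans; [apply sfeq_sym, (couniversal_transpose_natural pi Y R eps _ _ _
                          (pair_second_over g1 g2 pg) _ hk
                          (over_comp _ _ _ _ _ (pair_second_over g1 g2 pg) hk)), sfeq_refl|].
    eapply sfeq_trans; [|exact Hbe].
    apply sfcomp_sfeq; [apply pbmap_sfeq, pair_glue_second | apply sfeq_refl].
Qed.
End PairPullback.

Section Glued.
Context {B E : semicat} (pi : semifunctor E B) (g1 g2 : mor B) (pg : cod g1 = dom g2).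
Local Notation P3 := (pair_over g1 g2 pg).
Local Notation Pob := (pbob pi P3).

(* The pushout of the pullbacks of [g1] and [g2] along the middle fibre: besides
   the lifts of [g1] and of [g2], its morphisms are the formal composable pairs. *)
Inductive glued_mor : Type :=
| gfirst (m : mor E) (h : fmor pi m = g1)
| gsecond (m : mor E) (h : fmor pi m = g2)
| gpair (m1 m2 : mor E) (h1 : fmor pi m1 = g1) (h2 : fmor pi m2 = g2) (h : cod m1 = dom m2).

Definition glued_dom (w : glued_mor) : Pob :=
  match w with
  | gfirst m h | gpair m _ h _ _ =>
      exist _ (v0, dom m) (eq_trans (f_equal dom (eq_sym h)) (fdom pi m))
  | gsecond m h =>
      exist _ (v1, dom m) (eq_trans pg (eq_trans (f_equal dom (eq_sym h)) (fdom pi m)))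
  end.

Definition glued_cod (w : glued_mor) : Pob :=
  match w with
  | gfirst m h => exist _ (v1, cod m) (eq_trans (f_equal cod (eq_sym h)) (fcod pi m))
  | gsecond m h | gpair _ m _ h _ =>
      exist _ (v2, cod m) (eq_trans (f_equal cod (eq_sym h)) (fcod pi m))
  end.

Definition glued_comp (u v : glued_mor) : glued_cod u = glued_dom v -> glued_mor :=
  match u as u', v as v' return glued_cod u' = glued_dom v' -> glued_mor with
  | gfirst m1 h1, gsecond m2 h2 => fun p =>
      gpair m1 m2 h1 h2 (f_equal (fun x : Pob => snd (proj1_sig x)) p)
  | _, _ => fun _ => u
  end.

Local Ltac vertex_contra p :=
  let H := fresh in
  pose proof (f_equal (fun x : Pob => fst (proj1_sig x)) p) as H; simpl in H; discriminate H.

Definition glued_sc : semicat.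
Proof.
  refine {| ob := Pob; mor := glued_mor; dom := glued_dom; cod := glued_cod; comp := glued_comp |}.
  - intros [] [] p; try reflexivity; try vertex_contra p; apply pbob_eq; reflexivity.
  - intros [] [] p; try vertex_contra p; apply pbob_eq; reflexivity.
  - intros [] [] w p q p' q'; try vertex_contra p. destruct w; vertex_contra p'.
Defined.

Definition glued_to_pullback : semifunctor glued_sc (pbc pi P3).
Proof.
  refine (@Build_semifunctor glued_sc (pbc pi P3) (fun x => x)
    (fun w => match w with
              | gfirst m h => exist _ ((a01 : mor pair_sc), m) (eq_sym h)
              | gsecond m h => exist _ ((a12 : mor pair_sc), m) (eq_sym h)
              | gpair m1 m2 h1 h2 h => exist _ ((a02 : mor pair_sc), comp m1 m2 h) _
              end) _ _ _).
  Unshelve.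
  4: { symmetry. apply fmor_comp_congr; assumption. }
  - intros []; apply pbob_eq; simpl; rewrite ?comp_dom; reflexivity.
  - intros []; apply pbob_eq; simpl; rewrite ?comp_cod; reflexivity.
  - intros [] [] p p'; try vertex_contra p. apply pbmor_eq. simpl. f_equal. apply comp_pi.
Defined.

Definition glued_obj : sobj B := Build_sobj glued_sc (sfcomp glued_to_pullback (pbproj B E pi P3)).

Lemma glued_to_pullback_over : over glued_obj (pbobj pi P3) glued_to_pullback.
Proof. split; reflexivity. Qed.

Local Ltac arrow_contra p :=
  let H := fresh in
  pose proof (f_equal (fun x => fst (proj1_sig x)) p) as H; simpl in H; discriminate H.

Definition glued_first : semifunctor (pbc pi (arrow_over g1)) glued_sc.
Proof.
  refine (@Build_semifunctor (pbc pi (arrow_over g1)) glued_sc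
     (fob (pbmap pi (X := arrow_over g1) (X' := P3) pair_first (pair_first_over g1 g2 pg)))
     (fun u => gfirst (snd (proj1_sig (u : pbmor pi (arrow_over g1)))) (eq_sym (proj2_sig u)))
     _ _ _).
  - intros u. apply pbob_eq. reflexivity.
  - intros u. apply pbob_eq. reflexivity.
  - intros u v p. arrow_contra p.
Defined.

Definition glued_second : semifunctor (pbc pi (arrow_over g2)) glued_sc.
Proof.
  refine (@Build_semifunctor (pbc pi (arrow_over g2)) glued_sc
     (fob (pbmap pi (X := arrow_over g2) (X' := P3) pair_second (pair_second_over g1 g2 pg)))
     (fun u => gsecond (snd (proj1_sig (u : pbmor pi (arrow_over g2)))) (eq_sym (proj2_sig u)))
     _ _ _).
  - intros u. apply pbob_eq. reflexivity.
  - intros u. apply pbob_eq. reflexivity.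
  - intros u v p. arrow_contra p.
Defined.

Lemma glued_first_over : over (pbobj pi (arrow_over g1)) glued_obj glued_first.
Proof.
  split; intro u; [exact (proj1 (pbmap_over pi _ _ _ (pair_first_over g1 g2 pg)) u) | reflexivity].
Qed.

Lemma glued_second_over : over (pbobj pi (arrow_over g2)) glued_obj glued_second.
Proof.
  split; intro u; [exact (proj1 (pbmap_over pi _ _ _ (pair_second_over g1 g2 pg)) u) | reflexivity].
Qed.
End Glued.

Section GluedSection.
Context {B E : semicat} (pi : semifunctor E B) (Hexp : exponentiable pi)
  (g1 g2 : mor B) (pg : cod g1 = dom g2).
Local Notation P3 := (pair_over g1 g2 pg).
Local Notation first_pb := (pbmap pi (X := arrow_over g1) (X' := P3) pair_first
                              (pair_first_over g1 g2 pg)).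
Local Notation second_pb := (pbmap pi (X := arrow_over g2) (X' := P3) pair_second
                               (pair_second_over g1 g2 pg)).
Context (psi : semifunctor (pbc pi P3) (glued_sc pi g1 g2 pg))
  (hpsi : over (pbobj pi P3) (glued_obj pi g1 g2 pg) psi)
  (Hfirst : sfeq (sfcomp first_pb psi) (glued_first pi g1 g2 pg))
  (Hsecond : sfeq (sfcomp second_pb psi) (glued_second pi g1 g2 pg)).

Lemma psi_ob_first u x : proj1_sig x = proj1_sig (fob first_pb u) -> fob psi x = x.
Proof. intros H. rewrite (pbob_eq x _ H). apply (proj1 Hfirst). Qed.

Lemma psi_ob_second u x : proj1_sig x = proj1_sig (fob second_pb u) -> fob psi x = x.
Proof. intros H. rewrite (pbob_eq x _ H). apply (proj1 Hsecond). Qed.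

Lemma psi_mor_first u x :
  proj1_sig x = proj1_sig (fmor first_pb u) -> fmor psi x = fmor (glued_first pi g1 g2 pg) u.
Proof. intros H. rewrite (pbmor_eq x _ H). apply (proj2 Hfirst). Qed.

Lemma psi_mor_second u x :
  proj1_sig x = proj1_sig (fmor second_pb u) -> fmor psi x = fmor (glued_second pi g1 g2 pg) u.
Proof. intros H. rewrite (pbmor_eq x _ H). apply (proj2 Hsecond). Qed.

Lemma glued_retraction :
  sfeq (sfcomp psi (glued_to_pullback pi g1 g2 pg)) (sfid (pbc pi P3)).
Proof.
  apply (pair_pullback_sfeq pi Hexp g1 g2 pg (pbobj pi P3)).
  - apply over_comp with (Y := glued_obj pi g1 g2 pg); [exact hpsi | apply glued_to_pullback_over].
  - apply over_id.
  - intros [[o e] p]. cbn. destruct o.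
    + apply (psi_ob_first (exist _ (false, e) p)); reflexivity.
    + apply (psi_ob_first (exist _ (true, e) p)); reflexivity.
    + apply (psi_ob_second (exist _ (true, e) p)); reflexivity.
  - intros [[o m] p] Hne. cbn in Hne |- *. destruct o; [| | contradiction].
    + rewrite (psi_mor_first (exist _ (tt, m) p)) by reflexivity. apply pbmor_eq; reflexivity.
    + rewrite (psi_mor_second (exist _ (tt, m) p)) by reflexivity. apply pbmor_eq; reflexivity.
Qed.

Lemma psi_composite (a b : mor E) (ha : fmor pi a = g1) (hb : fmor pi b = g2)
  (q : cod a = dom b) (U : mor (pbc pi P3)) :
  proj1_sig (U : pbmor pi P3) = ((a02 : mor pair_sc), comp a b q) ->
  fmor psi U = gpair pi g1 g2 a b ha hb q.
Proof.
  intros HU.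
  set (A := exist _ ((a01 : mor pair_sc), a) (eq_sym ha) : mor (pbc pi P3)).
  set (C := exist _ ((a12 : mor pair_sc), b) (eq_sym hb) : mor (pbc pi P3)).
  assert (hAC : pbcod _ _ pi _ A = pbdom _ _ pi _ C)
    by (apply pbob_eq; simpl; rewrite q; reflexivity).
  assert (HUAC : U = pbcomp _ _ pi _ A C hAC)
    by (apply pbmor_eq; rewrite HU; simpl; f_equal; apply comp_pi).
  assert (HA : fmor psi A = gfirst pi g1 g2 a ha).
  { rewrite (psi_mor_first (exist _ (tt, a) (eq_sym ha))) by reflexivity.
    cbn. f_equal. apply proof_irrelevance. }
  assert (HC : fmor psi C = gsecond pi g1 g2 b hb).
  { rewrite (psi_mor_second (exist _ (tt, b) (eq_sym hb))) by reflexivity.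
    cbn. f_equal. apply proof_irrelevance. }
  assert (p' : cod (fmor psi A) = dom (fmor psi C)) by (rewrite fcod, fdom; f_equal; exact hAC).
  rewrite HUAC. change (pbcomp _ _ pi _ A C hAC) with (comp (s := pbc pi P3) A C hAC).
  rewrite (fcomp psi A C hAC p'). revert p'. rewrite HA, HC. intros p'. cbn.
  f_equal. apply proof_irrelevance.
Qed.
End GluedSection.

Lemma unique_lifting_binary_of_exponentiable {B E : semicat} (pi : semifunctor E B) :
  exponentiable pi -> unique_lifting_binary pi.
Proof.
  intros Hexp f g1 g2 pg Hcomp.
  destruct (pair_pullback_glue pi Hexp g1 g2 pg (glued_obj pi g1 g2 pg)
              _ (glued_first_over pi g1 g2 pg) _ (glued_second_over pi g1 g2 pg))
    as [psi [hpsi [Hfirst Hsecond]]].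
  { intros e p p'. apply pbob_eq. reflexivity. }
  set (U := exist _ ((a02 : mor pair_sc), f) Hcomp : mor (pbc pi (pair_over g1 g2 pg))).
  pose proof (proj2 (glued_retraction pi Hexp g1 g2 pg psi hpsi Hfirst Hsecond) U) as HU.
  change (fmor (glued_to_pullback pi g1 g2 pg) (fmor psi U) = U) in HU.
  apply (f_equal (fun u => proj1_sig (u : pbmor pi _))) in HU.
  destruct (fmor psi U) as [m h | m h | m1 m2 h1 h2 h] eqn:Ew; simpl in HU; try discriminate HU.
  injection HU as Hf.
  exists (m1, m2). split; [simpl; eauto|].
  intros [a b] [ha [hb [q Eq]]]. simpl in *.
  rewrite (psi_composite pi g1 g2 pg psi Hfirst Hsecond a b ha hb q U) in Ew
    by (simpl; rewrite Eq; reflexivity).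
  injection Ew as <- <-. reflexivity.
Qed.

Theorem proposition3p9 (B E : semicat) (pi : semifunctor E B) :
  (exponentiable pi <-> nabla_preserves_opcartesian pi) /\
  (nabla_preserves_opcartesian pi <-> unique_lifting_nary pi) /\
  (unique_lifting_nary pi <-> unique_lifting_binary pi).
Proof.
  pose proof (unique_lifting_nary_iff_binary pi) as H34.
  pose proof (unique_lifting_binary_of_exponentiable pi) as H14.
  pose proof (exponentiable_of_binary pi) as H41.
  pose proof (unique_lifting_nary_of_nabla pi) as H23.
  pose proof (nabla_preserves_opcartesian_of_binary pi) as H42.
  tauto.
Qed.
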